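(* Let $u_0\in H^s(\mathbb R)$ with $s$ large enough that the quantities below are finite, $T>0$, $c>0$, $\Delta t,\Delta x>0$. For every $n\in\{0,\dots,N-1\}$, every $\gamma\in[0,\frac12)$ and every $\theta\in[\frac12,1]$, $$\begin{aligned}\|\mathcal A_\theta e^{n+1}\|^2_{\ell^2_\Delta}\le{}&\|\mathcal A_\theta e^n\|^2_{\ell^2_\Delta}[1+\Delta tE_a]+\Delta t\|\epsilon^n\|^2_{\ell^2_\Delta}\Big\{1+4\frac{\Delta t}{\Delta x}+\Delta t\Big\}+\Delta t\langle B_b,[D_+(e)^n]^2\rangle\\&+\Delta t^2B_c\|D(e)^n\|^2_{\ell^2_\Delta}+\Delta tB_e\|D_+D(e)^n\|^2_{\ell^2_\Delta}+\Delta tB_f\|D_+D_+D_-(e)^n\|^2_{\ell^2_\Delta},\end{aligned}$$ where, with $U=\|[u_\Delta]^n\|_{\ell^\infty}$, $U_+=\|D_+([u_\Delta])^n\|_{\ell^\infty}$, $E=\|e^n\|_{\ell^\infty}$, $X=\Delta x^{\frac12-\gamma}+E+9E^2\Delta x^{\gamma-\frac12}$, $\mathbf 1=(1,1,\dots)$: $$E_a=U^2\Big(1+\frac{\Delta t}{\Delta x}\Big)+U_+\Big(7+\frac{\Delta t}{\Delta x}\Big[2c+\frac23E+\frac32U\Big]\Big)+U_+^2\Big[\sqrt2\frac{\sqrt{\Delta t}}{\sqrt{\Delta x}}+\frac{\Delta t^2}{\Delta x^2}\Big]+1+2c^2\frac{\Delta t}{\Delta x},$$ $$B_b=\Big(\frac{\Delta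 x}{6}D_+(e)^n-c\mathbf 1\Big)(\Delta x-c\Delta t),\qquad B_c=U^2+\Big\{E^2[1+\Delta x]+2EU+\frac{2c}{3}E\Big\}-c^2,$$ $$B_e=2(1-\theta)\Delta t\Big\{U+E+\frac12+\frac X2\Big\}-\Delta x,\qquad B_f=\Delta t\Big\{(1-2\theta)+\frac{(1-\theta)\Delta x^2}{2}\Big[c+\frac12+\frac X2\Big]\Big\}-\frac{\Delta x^3}{4}.$$
   Context: KdV equation $\partial_t u+\partial_x(u^2/2)+\partial_x^3u=0$ with datum $u_0$ and exact solution $u$. $t^n=n\Delta t$, $x_j=j\Delta x$, $N=\lfloor T/\Delta t\rfloor$. For sequences: $D_+(a)_j=(a_{j+1}-a_j)/\Delta x$, $D_-(a)_j=(a_j-a_{j-1})/\Delta x$, $D=\frac12(D_++D_-)$; products and powers componentwise; $\langle a,b\rangle=\Delta x\sum_ja_jb_j$, $\|a\|_{\ell^2_\Delta}=\langle a,a\rangle^{1/2}$, $\|a\|_{\ell^\infty}=\sup_j|a_j|$. $\mathcal A_\theta=I+\theta\Delta tD_+D_+D_-$. Scheme with parameters $c,\theta$: $\frac{v^{n+1}_j-v^n_j}{\Delta t}+D(\frac{v^2}{2})^n_j+\theta D_+D_+D_-(v)^{n+1}_j+(1-\theta)D_+D_+D_-(v)^n_j=\frac{c\Delta x}{2}D_+D_-(v)^n_j$, with $v^0_j=\frac1{\Delta x}\int_{x_j}^{x_{j+1}}u_0$. Averaged exact solution $[u_\Delta]^0_j=\frac1{\Delta x}\int_{x_j}^{x_{j+1}}u_0$,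 $[u_\Delta]^n_j=\frac{1}{\Delta x(\min(t^{n+1},T)-t^n)}\int_{t^n}^{\min(t^{n+1},T)}\int_{x_j}^{x_{j+1}}u\,dy\,ds$ for $n\ge1$. Error $e^n_j=v^n_j-[u_\Delta]^n_j$. Consistency error $\epsilon^n_j=\frac{[u_\Delta]^{n+1}_j-[u_\Delta]^n_j}{\Delta t}+D(\frac{[u_\Delta]^2}{2})^n_j+\theta D_+D_+D_-([u_\Delta])^{n+1}_j+(1-\theta)D_+D_+D_-([u_\Delta])^n_j-\frac{c\Delta x}{2}D_+D_-([u_\Delta])^n_j$. *)

From Stdlib Require Import Reals Lra ZArith.
From Coquelicot Require Import Coquelicot.
Open Scope R_scope.

(** Sequences indexed by j in Z (grid points x_j = j*dx). *)
Definition seqZ := Z -> R.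

Definition sumZ (a : seqZ) : R :=
  Series (fun k : nat => a (Z.of_nat k)) +
  Series (fun k : nat => a (- Z.of_nat (S k))%Z).

Definition summableZ (a : seqZ) : Prop :=
  ex_series (fun k : nat => Rabs (a (Z.of_nat k))) /\
  ex_series (fun k : nat => Rabs (a (- Z.of_nat (S k))%Z)).

Definition l2Z (a : seqZ) : Prop := summableZ (fun j => (a j) ^ 2).

Definition ipD (dx : R) (a b : seqZ) : R := dx * sumZ (fun j => a j * b j).
Definition nrmD (dx : R) (a : seqZ) : R := sqrt (ipD dx a a).

Definition supnorm (a : seqZ) : R :=
  real (Lub_Rbar (fun r => exists j : Z, r = Rabs (a j))).

Definition Dp (dx : R) (a : seqZ) : seqZ := fun j => (a (j + 1)%Z - a j) / dx.
Definition Dm (dx : R) (a : seqZ) : seqZ := fun j => (a j - a (j - 1)%Z) / dx.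
Definition Dc (dx : R) (a : seqZ) : seqZ := fun j => (Dp dx a j + Dm dx a j) / 2.
Definition D3 (dx : R) (a : seqZ) : seqZ := Dp dx (Dp dx (Dm dx a)).

Definition Atheta (theta dt dx : R) (a : seqZ) : seqZ :=
  fun j => a j + theta * dt * D3 dx a j.

Definition Nsteps (T dt : R) : nat := Z.to_nat (Int_part (T / dt)).

Definition tn (dt : R) (n : nat) : R := INR n * dt.
Definition xj (dx : R) (j : Z) : R := IZR j * dx.

(** Averaged exact solution [u_Delta]^n_j ; u : time -> space -> R *)
Definition uavg (u0 : R -> R) (u : R -> R -> R) (T dt dx : R) (n : nat) : seqZ :=
  fun j =>
  match n with
  | O => / dx * RInt u0 (xj dx j) (xj dx (j + 1))
  | S _ =>
      / (dx * (Rmin (tn dt (S n)) T - tn dt n)) *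
      RInt (fun s => RInt (fun y => u s y) (xj dx j) (xj dx (j + 1)))
           (tn dt n) (Rmin (tn dt (S n)) T)
  end.

Definition scheme (c theta dt dx : R) (v : nat -> seqZ) : Prop :=
  forall (n : nat) (j : Z),
    (v (S n) j - v n j) / dt + Dc dx (fun i => (v n i) ^ 2 / 2) j
    + theta * D3 dx (v (S n)) j + (1 - theta) * D3 dx (v n) j
    = c * dx / 2 * Dp dx (Dm dx (v n)) j.

Definition consist (c theta dt dx : R) (w : nat -> seqZ) (n : nat) : seqZ :=
  fun j =>
    (w (S n) j - w n j) / dt + Dc dx (fun i => (w n i) ^ 2 / 2) j
    + theta * D3 dx (w (S n)) j + (1 - theta) * D3 dx (w n) j
    - c * dx / 2 * Dp dx (Dm dx (w n)) j.

Definition kdv_solution (u0 : R -> R) (u : R -> R -> R) (T : R) : Prop :=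
  (forall x, u 0 x = u0 x) /\
  (forall t x, 0 <= t <= T -> continuous (fun p : R * R => u (fst p) (snd p)) (t, x)) /\
  (forall t x, 0 < t < T ->
     ex_derive (fun s => u s x) t /\
     ex_derive (fun y => (u t y) ^ 2 / 2) x /\
     ex_derive_n (fun y => u t y) 3 x /\
     Derive (fun s => u s x) t + Derive (fun y => (u t y) ^ 2 / 2) x
       + Derive_n (fun y => u t y) 3 x = 0).

Definition Xq (gamma dx E : R) : R :=
  Rpower dx (1/2 - gamma) + E + 9 * E ^ 2 * Rpower dx (gamma - 1/2).

Definition Ea (c dt dx U Up E : R) : R :=
  U ^ 2 * (1 + dt / dx)
  + Up * (7 + dt / dx * (2 * c + 2 / 3 * E + 3 / 2 * U))
  + Up ^ 2 * (sqrt 2 * sqrt dt / sqrt dx + dt ^ 2 / dx ^ 2)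
  + 1 + 2 * c ^ 2 * dt / dx.

Definition Bb (c dt dx : R) (Dpe : seqZ) : seqZ :=
  fun j => (dx / 6 * Dpe j - c * 1) * (dx - c * dt).

Definition Bc (c dx U E : R) : R :=
  U ^ 2 + (E ^ 2 * (1 + dx) + 2 * E * U + 2 * c / 3 * E) - c ^ 2.

Definition Be (theta gamma dt dx U E : R) : R :=
  2 * (1 - theta) * dt * (U + E + 1/2 + Xq gamma dx E / 2) - dx.

Definition Bf (c theta gamma dt dx E : R) : R :=
  dt * ((1 - 2 * theta) + (1 - theta) * dx ^ 2 / 2 * (c + 1/2 + Xq gamma dx E / 2))
  - dx ^ 3 / 4.

(* Subtracting the consistency relation of w = [u_Delta] from the scheme gives the error equation
     A_theta e^(n+1) = A_theta e^n
                       - dt (D+D+D- e^n + D(w^n e^n + (e^n)^2/2) - c dx/2 D+D- e^n + eps^n).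
   Squaring it pointwise, Young's inequality absorbs every product with eps^n.  The remaining
   linear cross terms are evaluated exactly by discrete summation by parts, while the nonlinear
   ones are bounded with the sup norms U, U+, E and the interpolation inequality
   (sum_j |D+D- e|_j |D e|_(j-1))^2 <= ||e||^2 ||D+D+D- e||^2, a consequence of
   Cauchy-Schwarz.  What is left over is a nonnegative combination of squared norms. *)

From Stdlib Require Import Reals Lra Lia ZArith.
From Coquelicot Require Import Coquelicot.
Open Scope R_scope.

(** * Sums over Z *)

Lemma ex_series_Rabs_le (a b : nat -> R) :
  (forall n, Rabs (b n) <= a n) -> ex_series a -> ex_series b.
Proof.
  intros Hab Ha. apply ex_series_Rabs.
  apply (@ex_series_le R_AbsRing R_CompleteNormedModule _ a); auto.
  intros n. unfold norm; simpl. unfold abs; simpl. rewrite Rabs_Rabsolu. apply Hab.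
Qed.

Lemma Series_zero : Series (fun _ : nat => 0) = 0.
Proof.
  rewrite (Series_ext _ (fun n => 0 * (fun _ => 1) n)) by (intros; ring).
  rewrite Series_scal_l. ring.
Qed.

Lemma Series_nonneg (a : nat -> R) :
  (forall n, 0 <= a n) -> ex_series a -> 0 <= Series a.
Proof.
  intros Hpos Ha. rewrite <- Series_zero.
  apply Series_le; auto. intros n; split; [lra|apply Hpos].
Qed.

Lemma Series_ge_term (a : nat -> R) (k : nat) :
  (forall n, 0 <= a n) -> ex_series a -> a k <= Series a.
Proof.
  intros Hpos Ha. rewrite (Series_incr_n a (S k)) by (auto; lia). simpl.
  assert (Htail : 0 <= Series (fun n => a (S (k + n)))).
  { apply Series_nonneg; [auto|]. apply (ex_series_incr_n a (S k)); auto. }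
  assert (Hpartial : a k <= sum_f_R0 a k).
  { destruct k as [|k]; simpl; [lra|].
    pose proof (cond_pos_sum a k Hpos). lra. }
  lra.
Qed.

Lemma summableZ_le (a b : seqZ) :
  (forall j, Rabs (b j) <= a j) -> summableZ a -> summableZ b.
Proof.
  intros Hab [Hp Hn]. split.
  - apply (ex_series_Rabs_le (fun k => Rabs (a (Z.of_nat k)))); [|exact Hp].
    intros k. rewrite Rabs_Rabsolu. eapply Rle_trans; [apply Hab|apply RRle_abs].
  - apply (ex_series_Rabs_le (fun k => Rabs (a (- Z.of_nat (S k))%Z))); [|exact Hn].
    intros k. rewrite Rabs_Rabsolu. eapply Rle_trans; [apply Hab|apply RRle_abs].
Qed.

Lemma summableZ_plus (a b : seqZ) :
  summableZ a -> summableZ b -> summableZ (fun j => a j + b j).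
Proof.
  intros [Ap An] [Bp Bn]. split.
  - apply (ex_series_Rabs_le (fun k => Rabs (a (Z.of_nat k)) + Rabs (b (Z.of_nat k)))).
    + intros k. rewrite Rabs_Rabsolu. apply Rabs_triang.
    + exact (ex_series_plus _ _ Ap Bp).
  - apply (ex_series_Rabs_le
             (fun k => Rabs (a (- Z.of_nat (S k))%Z) + Rabs (b (- Z.of_nat (S k))%Z))).
    + intros k. rewrite Rabs_Rabsolu. apply Rabs_triang.
    + exact (ex_series_plus _ _ An Bn).
Qed.

Lemma summableZ_scal (c : R) (a : seqZ) : summableZ a -> summableZ (fun j => c * a j).
Proof.
  intros [Ap An]. split.
  - apply (ex_series_Rabs_le (fun k => Rabs c * Rabs (a (Z.of_nat k)))).
    + intros k. rewrite Rabs_Rabsolu, Rabs_mult. lra.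
    + exact (ex_series_scal_l _ _ Ap).
  - apply (ex_series_Rabs_le (fun k => Rabs c * Rabs (a (- Z.of_nat (S k))%Z))).
    + intros k. rewrite Rabs_Rabsolu, Rabs_mult. lra.
    + exact (ex_series_scal_l _ _ An).
Qed.

Lemma summableZ_abs (a : seqZ) : summableZ a -> summableZ (fun j => Rabs (a j)).
Proof.
  intros [Ap An].
  split; [revert Ap|revert An]; apply ex_series_ext;
    intros k; rewrite Rabs_Rabsolu; reflexivity.
Qed.

Lemma summableZ_dominated (a b : seqZ) :
  (forall j, Rabs (b j) <= Rabs (a j)) -> summableZ a -> summableZ b.
Proof. intros Hab Ha. exact (summableZ_le _ _ Hab (summableZ_abs a Ha)). Qed.

Lemma summableZ_ext (a b : seqZ) : (forall j, a j = b j) -> summableZ a -> summableZ b.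
Proof. intros Hab. apply summableZ_dominated. intros j; rewrite Hab; lra. Qed.

Lemma summableZ_opp (a : seqZ) : summableZ a -> summableZ (fun j => - a j).
Proof. apply summableZ_dominated. intros j; rewrite Rabs_Ropp; lra. Qed.

Lemma summableZ_minus (a b : seqZ) :
  summableZ a -> summableZ b -> summableZ (fun j => a j - b j).
Proof. intros Ha Hb. exact (summableZ_plus _ _ Ha (summableZ_opp _ Hb)). Qed.

Lemma summableZ_div (a : seqZ) (c : R) : summableZ a -> summableZ (fun j => a j / c).
Proof.
  intros Ha. eapply summableZ_ext, (summableZ_scal (/ c) a Ha). intros j; apply Rmult_comm.
Qed.

Lemma summableZ_shift_succ (a : seqZ) : summableZ a -> summableZ (fun j => a (j + 1)%Z).
Proof.
  intros [Ap An]. split.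
  - apply (proj1 (ex_series_incr_1 _)) in Ap.
    revert Ap; apply ex_series_ext; intros k; cbv beta; do 2 f_equal; lia.
  - apply (proj2 (ex_series_incr_1 _)).
    revert An; apply ex_series_ext; intros k; cbv beta; do 2 f_equal; lia.
Qed.

Lemma summableZ_shift_pred (a : seqZ) : summableZ a -> summableZ (fun j => a (j - 1)%Z).
Proof.
  intros [Ap An]. split.
  - apply (proj2 (ex_series_incr_1 _)).
    revert Ap; apply ex_series_ext; intros k; cbv beta; do 2 f_equal; lia.
  - apply (proj1 (ex_series_incr_1 _)) in An.
    revert An; apply ex_series_ext; intros k; cbv beta; do 2 f_equal; lia.
Qed.

Lemma summableZ_shift (a : seqZ) (k : Z) : summableZ a -> summableZ (fun j => a (j + k)%Z).
Proof.
  intros Ha. destruct (Z_le_gt_dec 0 k).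
  - replace k with (Z.of_nat (Z.to_nat k)) by lia.
    induction (Z.to_nat k) as [|m IH].
    + refine (summableZ_ext _ _ _ Ha); intros j; cbv beta; f_equal; lia.
    + refine (summableZ_ext _ _ _ (summableZ_shift_succ _ IH)); intros j; cbv beta; f_equal; lia.
  - replace k with (- Z.of_nat (Z.to_nat (- k)))%Z by lia.
    induction (Z.to_nat (- k)) as [|m IH].
    + refine (summableZ_ext _ _ _ Ha); intros j; cbv beta; f_equal; lia.
    + refine (summableZ_ext _ _ _ (summableZ_shift_pred _ IH)); intros j; cbv beta; f_equal; lia.
Qed.

Lemma sumZ_ext (a b : seqZ) : (forall j, a j = b j) -> sumZ a = sumZ b.
Proof. intros Hab. unfold sumZ. f_equal; apply Series_ext; intros; apply Hab. Qed.

Lemma sumZ_plus (a b : seqZ) :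
  summableZ a -> summableZ b -> sumZ (fun j => a j + b j) = sumZ a + sumZ b.
Proof.
  intros [Ap An] [Bp Bn]. unfold sumZ.
  rewrite !Series_plus by (apply ex_series_Rabs; assumption). ring.
Qed.

Lemma sumZ_scal (c : R) (a : seqZ) : sumZ (fun j => c * a j) = c * sumZ a.
Proof. unfold sumZ. rewrite !Series_scal_l. ring. Qed.

Lemma sumZ_opp (a : seqZ) : sumZ (fun j => - a j) = - sumZ a.
Proof. unfold sumZ. rewrite !Series_opp. ring. Qed.

Lemma sumZ_minus (a b : seqZ) :
  summableZ a -> summableZ b -> sumZ (fun j => a j - b j) = sumZ a - sumZ b.
Proof.
  intros Ha Hb. unfold Rminus.
  rewrite (sumZ_plus a (fun j => - b j)), sumZ_opp; auto.
  apply summableZ_opp; assumption.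
Qed.

Lemma sumZ_nonneg (a : seqZ) : summableZ a -> (forall j, 0 <= a j) -> 0 <= sumZ a.
Proof.
  intros [Ap An] Hpos. unfold sumZ.
  apply Rplus_le_le_0_compat; apply Series_nonneg; auto; apply ex_series_Rabs; assumption.
Qed.

Lemma sumZ_le (a b : seqZ) :
  summableZ a -> summableZ b -> (forall j, a j <= b j) -> sumZ a <= sumZ b.
Proof.
  intros Ha Hb Hab.
  assert (H : 0 <= sumZ (fun j => b j - a j)).
  { apply sumZ_nonneg; [apply summableZ_minus; assumption|]. intros j; specialize (Hab j); lra. }
  rewrite sumZ_minus in H; auto. lra.
Qed.

Lemma sumZ_shift_succ (a : seqZ) : summableZ a -> sumZ (fun j => a (j + 1)%Z) = sumZ a.
Proof.
  intros [Ap An]. unfold sumZ.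
  assert (Hp : Series (fun k => a (Z.of_nat k))
               = a 0%Z + Series (fun k => a (Z.of_nat k + 1)%Z)).
  { rewrite Series_incr_1 by (apply ex_series_Rabs; assumption).
    f_equal. apply Series_ext. intros k. f_equal. lia. }
  assert (Hn : Series (fun k => a (- Z.of_nat (S k) + 1)%Z)
               = a 0%Z + Series (fun k => a (- Z.of_nat (S k))%Z)).
  { rewrite Series_incr_1.
    - f_equal. apply Series_ext. intros k. f_equal. lia.
    - apply ex_series_Rabs, (proj2 (ex_series_incr_1 _)).
      revert An; apply ex_series_ext; intros k; cbv beta; do 2 f_equal; lia. }
  rewrite Hp, Hn. ring.
Qed.

Lemma sumZ_shift (a : seqZ) (k : Z) : summableZ a -> sumZ (fun j => a (j + k)%Z) = sumZ a.
Proof.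
  intros Ha. destruct (Z_le_gt_dec 0 k).
  - replace k with (Z.of_nat (Z.to_nat k)) by lia.
    induction (Z.to_nat k) as [|m IH].
    + apply sumZ_ext. intros j; f_equal; lia.
    + rewrite <- IH, <- (sumZ_shift_succ (fun j => a (j + Z.of_nat m)%Z))
        by (apply summableZ_shift; assumption).
      apply sumZ_ext. intros j; f_equal; lia.
  - replace k with (- Z.of_nat (Z.to_nat (- k)))%Z by lia.
    induction (Z.to_nat (- k)) as [|m IH].
    + apply sumZ_ext. intros j; f_equal; lia.
    + rewrite <- IH, <- (sumZ_shift_succ (fun j => a (j + - Z.of_nat (S m))%Z))
        by (apply summableZ_shift; assumption).
      apply sumZ_ext. intros j; f_equal; lia.
Qed.

Lemma sumZ_eq_telescope (F G phi : seqZ) :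
  summableZ F -> summableZ G -> summableZ phi ->
  (forall j, F j = G j + (phi (j + 1)%Z - phi j)) -> sumZ F = sumZ G.
Proof.
  intros HF HG Hphi HFG.
  assert (Hshift := summableZ_shift_succ phi Hphi).
  rewrite (sumZ_ext _ _ HFG), sumZ_plus, sumZ_minus, sumZ_shift_succ by
    (auto; apply summableZ_minus; assumption).
  ring.
Qed.

(** * Bounded and square-summable sequences *)

Definition boundedZ (a : seqZ) : Prop := exists M, forall j, Rabs (a j) <= M.

Lemma boundedZ_const (c : R) : boundedZ (fun _ => c).
Proof. exists (Rabs c). intros; lra. Qed.

Lemma summableZ_boundedZ (a : seqZ) : summableZ a -> boundedZ a.
Proof.
  intros [Ap An].
  set (Sp := Series (fun k => Rabs (a (Z.of_nat k)))).
  set (Sn := Series (fun k => Rabs (a (- Z.of_nat (S k))%Z))).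
  assert (HSp : forall k, Rabs (a (Z.of_nat k)) <= Sp)
    by (intros k; apply (Series_ge_term (fun k => Rabs (a (Z.of_nat k)))); auto using Rabs_pos).
  assert (HSn : forall k, Rabs (a (- Z.of_nat (S k))%Z) <= Sn)
    by (intros k; apply (Series_ge_term (fun k => Rabs (a (- Z.of_nat (S k))%Z)));
        auto using Rabs_pos).
  exists (Sp + Sn). intros j. assert (0 <= Sp) by (eapply Rle_trans, (HSp O); apply Rabs_pos).
  assert (0 <= Sn) by (eapply Rle_trans, (HSn O); apply Rabs_pos).
  destruct (Z_le_gt_dec 0 j).
  - pose proof (HSp (Z.to_nat j)) as Hj. rewrite Z2Nat.id in Hj by lia. lra.
  - pose proof (HSn (Z.to_nat (- j - 1))) as Hj.
    replace (- Z.of_nat (S (Z.to_nat (- j - 1))))%Z with j in Hj by lia. lra.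
Qed.

Lemma l2Z_ext (a b : seqZ) : (forall j, a j = b j) -> l2Z a -> l2Z b.
Proof. intros Hab. apply summableZ_ext. intros j. rewrite Hab. reflexivity. Qed.

Lemma summableZ_mult (a b : seqZ) : l2Z a -> l2Z b -> summableZ (fun j => a j * b j).
Proof.
  intros Ha Hb. apply (summableZ_le (fun j => a j ^ 2 + b j ^ 2)).
  - intros j. rewrite Rabs_mult, <- (pow2_abs (a j)), <- (pow2_abs (b j)).
    pose proof (pow2_ge_0 (Rabs (a j) - Rabs (b j))). nra.
  - apply summableZ_plus; assumption.
Qed.

Lemma l2Z_plus (a b : seqZ) : l2Z a -> l2Z b -> l2Z (fun j => a j + b j).
Proof.
  intros Ha Hb. unfold l2Z.
  refine (summableZ_ext _ _ _ (summableZ_plus _ _ (summableZ_plus _ _ Ha Hb)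
                                 (summableZ_scal 2 _ (summableZ_mult _ _ Ha Hb)))).
  intros j; cbv beta; ring.
Qed.

Lemma l2Z_scal (c : R) (a : seqZ) : l2Z a -> l2Z (fun j => c * a j).
Proof.
  intros Ha. refine (summableZ_ext _ _ _ (summableZ_scal (c ^ 2) _ Ha)).
  intros j; cbv beta; ring.
Qed.

Lemma l2Z_opp (a : seqZ) : l2Z a -> l2Z (fun j => - a j).
Proof. intros Ha. refine (l2Z_ext _ _ _ (l2Z_scal (-1) _ Ha)). intros j; ring. Qed.

Lemma l2Z_minus (a b : seqZ) : l2Z a -> l2Z b -> l2Z (fun j => a j - b j).
Proof. intros Ha Hb. exact (l2Z_plus _ _ Ha (l2Z_opp _ Hb)). Qed.

Lemma l2Z_div (a : seqZ) (c : R) : l2Z a -> l2Z (fun j => a j / c).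
Proof.
  intros Ha. refine (l2Z_ext _ _ _ (l2Z_scal (/ c) _ Ha)). intros j; cbv beta; unfold Rdiv; ring.
Qed.

Lemma l2Z_shift (a : seqZ) (k : Z) : l2Z a -> l2Z (fun j => a (j + k)%Z).
Proof. apply (summableZ_shift (fun j => a j ^ 2)). Qed.

Lemma l2Z_shift_sub (a : seqZ) (k : Z) : l2Z a -> l2Z (fun j => a (j - k)%Z).
Proof.
  intros Ha. refine (l2Z_ext _ _ _ (l2Z_shift a (- k) Ha)). intros j; cbv beta; f_equal; lia.
Qed.

Lemma l2Z_boundedZ (a : seqZ) : l2Z a -> boundedZ a.
Proof.
  intros Ha. destruct (summableZ_boundedZ _ Ha) as [M HM]. exists (1 + M). intros j.
  specialize (HM j). rewrite Rabs_right, <- pow2_abs in HM by (apply Rle_ge, pow2_ge_0).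
  pose proof (Rabs_pos (a j)). nra.
Qed.

Lemma l2Z_bounded_mult (m a : seqZ) : boundedZ m -> l2Z a -> l2Z (fun j => m j * a j).
Proof.
  intros [M HM] Ha. apply (summableZ_le (fun j => M ^ 2 * a j ^ 2)).
  - intros j. rewrite Rabs_right by (apply Rle_ge, pow2_ge_0).
    rewrite Rpow_mult_distr, <- (pow2_abs (m j)).
    apply Rmult_le_compat_r; [apply pow2_ge_0|].
    pose proof (Rabs_pos (m j)). specialize (HM j). nra.
  - apply summableZ_scal; assumption.
Qed.

Lemma l2Z_sq (a : seqZ) : l2Z a -> l2Z (fun j => a j ^ 2).
Proof.
  intros Ha. refine (l2Z_ext _ _ _ (l2Z_bounded_mult _ _ (l2Z_boundedZ _ Ha) Ha)).
  intros j; cbv beta; ring.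
Qed.

Lemma l2Z_abs (a : seqZ) : l2Z a -> l2Z (fun j => Rabs (a j)).
Proof. apply summableZ_ext. intros j. rewrite pow2_abs. reflexivity. Qed.

Lemma summableZ_bounded_mult (m a : seqZ) :
  boundedZ m -> summableZ a -> summableZ (fun j => m j * a j).
Proof.
  intros [M HM] Ha. apply (summableZ_le (fun j => M * Rabs (a j))).
  - intros j. rewrite Rabs_mult. apply Rmult_le_compat_r; [apply Rabs_pos|apply HM].
  - apply summableZ_scal, summableZ_abs; assumption.
Qed.

Lemma summableZ_cube (a : seqZ) : l2Z a -> summableZ (fun j => a j ^ 3).
Proof.
  intros Ha.
  refine (summableZ_ext _ _ _
            (summableZ_bounded_mult _ _ (l2Z_boundedZ _ Ha) (summableZ_mult _ _ Ha Ha))).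
  intros j; cbv beta; ring.
Qed.

Lemma l2Z_Dp (dx : R) (a : seqZ) : l2Z a -> l2Z (Dp dx a).
Proof. intros Ha. apply l2Z_div, l2Z_minus, Ha. apply (l2Z_shift a 1 Ha). Qed.

Lemma l2Z_Dm (dx : R) (a : seqZ) : l2Z a -> l2Z (Dm dx a).
Proof. intros Ha. apply l2Z_div, l2Z_minus; [exact Ha|apply (l2Z_shift_sub a 1 Ha)]. Qed.

Lemma l2Z_Dc (dx : R) (a : seqZ) : l2Z a -> l2Z (Dc dx a).
Proof. intros Ha. apply l2Z_div, l2Z_plus; [apply l2Z_Dp|apply l2Z_Dm]; exact Ha. Qed.

Lemma l2Z_D3 (dx : R) (a : seqZ) : l2Z a -> l2Z (D3 dx a).
Proof. intros Ha. apply l2Z_Dp, l2Z_Dp, l2Z_Dm, Ha. Qed.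

Lemma l2Z_Atheta (theta dt dx : R) (a : seqZ) : l2Z a -> l2Z (Atheta theta dt dx a).
Proof.
  intros Ha. apply l2Z_plus; [exact Ha|].
  apply (l2Z_bounded_mult (fun _ => theta * dt)); [apply boundedZ_const|apply l2Z_D3, Ha].
Qed.

Definition avg (a : seqZ) : seqZ := fun j => (a (j + 1)%Z + a (j - 1)%Z) / 2.

Lemma l2Z_avg (a : seqZ) : l2Z a -> l2Z (avg a).
Proof.
  intros Ha. apply l2Z_div, l2Z_plus; [apply (l2Z_shift a 1)|apply (l2Z_shift_sub a 1)]; exact Ha.
Qed.

Ltac bounded_tac := match goal with
  | |- boundedZ (fun j => ?c) => apply (boundedZ_const c)
  | |- _ => first [assumption | apply l2Z_boundedZ; l2_tac]
  end
with l2_tac := match goal with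
  | |- l2Z (fun j => Rabs (@?A j)) => apply (l2Z_abs A); l2_tac
  | |- l2Z (fun j => ?f (j + ?k)%Z) => apply (l2Z_shift f k); l2_tac
  | |- l2Z (fun j => ?f (j - ?k)%Z) => apply (l2Z_shift_sub f k); l2_tac
  | |- l2Z (fun j => @?A j + @?B j) => apply (l2Z_plus A B); l2_tac
  | |- l2Z (fun j => @?A j - @?B j) => apply (l2Z_minus A B); l2_tac
  | |- l2Z (fun j => - @?A j) => apply (l2Z_opp A); l2_tac
  | |- l2Z (fun j => @?A j / ?c) => apply (l2Z_div A c); l2_tac
  | |- l2Z (fun j => @?A j ^ 2) => apply (l2Z_sq A); l2_tac
  | |- l2Z (fun j => @?A j * @?B j) =>
      apply (l2Z_bounded_mult A B); [bounded_tac|l2_tac]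
  | |- l2Z (fun j => Dp ?dx ?a j) => apply (l2Z_Dp dx a); l2_tac
  | |- l2Z (fun j => Dm ?dx ?a j) => apply (l2Z_Dm dx a); l2_tac
  | |- l2Z (fun j => Dc ?dx ?a j) => apply (l2Z_Dc dx a); l2_tac
  | |- l2Z (fun j => D3 ?dx ?a j) => apply (l2Z_D3 dx a); l2_tac
  | |- l2Z (Dp ?dx ?a) => apply (l2Z_Dp dx a); l2_tac
  | |- l2Z (Dm ?dx ?a) => apply (l2Z_Dm dx a); l2_tac
  | |- l2Z (Dc ?dx ?a) => apply (l2Z_Dc dx a); l2_tac
  | |- l2Z (D3 ?dx ?a) => apply (l2Z_D3 dx a); l2_tac
  | |- l2Z (fun j => Atheta ?th ?dt ?dx ?a j) => apply (l2Z_Atheta th dt dx a); l2_tac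
  | |- l2Z (Atheta ?th ?dt ?dx ?a) => apply (l2Z_Atheta th dt dx a); l2_tac
  | |- l2Z (fun j => avg ?a j) => apply (l2Z_avg a); l2_tac
  | |- l2Z (avg ?a) => apply (l2Z_avg a); l2_tac
  | |- _ => assumption
  end.

Ltac summable_tac := match goal with
  | |- summableZ (fun j => ?f (j - ?k)%Z) =>
      apply (summableZ_ext (fun j => f (j + - k)%Z));
      [intros; f_equal; lia | apply (summableZ_shift f (- k)); summable_tac]
  | |- summableZ (fun j => @?A j + @?B j) => apply (summableZ_plus A B); summable_tac
  | |- summableZ (fun j => @?A j - @?B j) => apply (summableZ_minus A B); summable_tac
  | |- summableZ (fun j => - @?A j) => apply (summableZ_opp A); summable_tac
  | |- summableZ (fun j => @?A j / ?c) => apply (summableZ_div A c); summable_tac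
  | |- summableZ (fun j => @?A j ^ 2) => change (l2Z A); l2_tac
  | |- summableZ (fun j => @?A j ^ 3) => apply (summableZ_cube A); l2_tac
  | |- summableZ (fun j => @?A j * @?B j) =>
      first [ apply (summableZ_mult A B); l2_tac
            | apply (summableZ_bounded_mult A B); [bounded_tac|summable_tac] ]
  | |- _ => assumption
  end.

Ltac distribute_sumZ :=
  repeat first [ rewrite sumZ_plus by summable_tac | rewrite sumZ_minus by summable_tac
               | rewrite sumZ_scal | rewrite sumZ_opp ].

Lemma sumZ_sq_shift (a : seqZ) (k : Z) : l2Z a ->
  sumZ (fun j => a (j + k)%Z * a (j + k)%Z) = sumZ (fun j => a j * a j).
Proof. intros Ha. apply (sumZ_shift (fun j => a j * a j)). summable_tac. Qed.

Lemma sumZ_sq_shift_sub (a : seqZ) (k : Z) : l2Z a ->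
  sumZ (fun j => a (j - k)%Z * a (j - k)%Z) = sumZ (fun j => a j * a j).
Proof.
  intros Ha. rewrite <- (sumZ_sq_shift a (- k) Ha).
  apply sumZ_ext. intros j. replace (j - k)%Z with (j + - k)%Z by lia. reflexivity.
Qed.

(** * Sup norm and the Cauchy-Schwarz inequality *)

Lemma supnorm_ge (a : seqZ) (j : Z) : boundedZ a -> Rabs (a j) <= supnorm a.
Proof.
  intros [M HM]. unfold supnorm.
  destruct (Lub_Rbar_correct (fun r => exists i, r = Rabs (a i))) as [Hub Hlub].
  assert (Hle : Rbar_le (Lub_Rbar (fun r => exists i, r = Rabs (a i))) M).
  { apply Hlub. intros x [i ->]. apply HM. }
  assert (Hge : Rbar_le (Rabs (a j)) (Lub_Rbar (fun r => exists i, r = Rabs (a i)))).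
  { apply Hub. exists j; reflexivity. }
  destruct (Lub_Rbar (fun r => exists i, r = Rabs (a i))); simpl in *; easy.
Qed.

Lemma supnorm_le (a : seqZ) (M : R) : (forall j, Rabs (a j) <= M) -> supnorm a <= M.
Proof.
  intros HM. unfold supnorm.
  destruct (Lub_Rbar_correct (fun r => exists i, r = Rabs (a i))) as [Hub Hlub].
  assert (Hle : Rbar_le (Lub_Rbar (fun r => exists i, r = Rabs (a i))) M).
  { apply Hlub. intros x [i ->]. apply HM. }
  assert (Hge : Rbar_le (Rabs (a 0%Z)) (Lub_Rbar (fun r => exists i, r = Rabs (a i)))).
  { apply Hub. exists 0%Z; reflexivity. }
  destruct (Lub_Rbar (fun r => exists i, r = Rabs (a i))); simpl in *; easy.
Qed.

Lemma supnorm_nonneg (a : seqZ) : boundedZ a -> 0 <= supnorm a.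
Proof. intros Ha. eapply Rle_trans; [apply Rabs_pos|apply (supnorm_ge a 0%Z Ha)]. Qed.

Lemma sumZ_sq_nonneg (a : seqZ) : l2Z a -> 0 <= sumZ (fun j => a j * a j).
Proof. intros Ha. apply sumZ_nonneg; [summable_tac|]. intros j. apply Rle_0_sqr. Qed.

Lemma nrmD_sq (dx : R) (a : seqZ) :
  0 < dx -> l2Z a -> nrmD dx a ^ 2 = dx * sumZ (fun j => a j * a j).
Proof.
  intros Hdx Ha. unfold nrmD, ipD. rewrite pow2_sqrt; [reflexivity|].
  apply Rmult_le_pos; [lra|apply sumZ_sq_nonneg, Ha].
Qed.

Lemma supnorm_Dp_le (dx : R) (w : seqZ) : 0 < dx -> boundedZ w ->
  supnorm (Dp dx w) * dx <= 2 * supnorm w.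
Proof.
  intros Hdx Hw.
  assert (H : supnorm (Dp dx w) <= 2 * supnorm w / dx).
  { apply supnorm_le. intros j. unfold Dp, Rdiv.
    rewrite Rabs_mult, Rabs_inv, (Rabs_right dx) by lra.
    apply Rmult_le_compat_r; [left; apply Rinv_0_lt_compat, Hdx|].
    unfold Rminus. eapply Rle_trans; [apply Rabs_triang|]. rewrite Rabs_Ropp.
    pose proof (supnorm_ge w (j + 1)%Z Hw). pose proof (supnorm_ge w j Hw). lra. }
  apply (Rmult_le_compat_r dx) in H; [|lra].
  replace (2 * supnorm w / dx * dx) with (2 * supnorm w) in H by (field; lra). exact H.
Qed.

Lemma nrmD_ext (dx : R) (a b : seqZ) : (forall j, a j = b j) -> nrmD dx a = nrmD dx b.
Proof.
  intros Hab. unfold nrmD, ipD. do 2 f_equal. apply sumZ_ext. intros j. rewrite Hab. reflexivity.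
Qed.

Lemma sq_le_of_quadratic_nonneg (A B X : R) :
  0 <= A -> (forall t, 0 <= t ^ 2 * A - 2 * t * X + B) -> X ^ 2 <= A * B.
Proof.
  intros HA Hq. destruct (Rle_lt_or_eq_dec 0 A HA) as [HA'|HA0].
  - specialize (Hq (X / A)).
    replace ((X / A) ^ 2 * A - 2 * (X / A) * X + B) with (B - X ^ 2 / A) in Hq by (field; lra).
    apply (Rmult_le_compat_r A) in Hq; [|lra].
    replace ((B - X ^ 2 / A) * A) with (A * B - X ^ 2) in Hq by (field; lra). lra.
  - subst A. rewrite Rmult_0_l.
    destruct (Req_dec X 0) as [->|HX]; [lra|].
    specialize (Hq ((B + 1) / (2 * X))).
    replace (((B + 1) / (2 * X)) ^ 2 * 0 - 2 * ((B + 1) / (2 * X)) * X + B) with (-1)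
      in Hq by (field; lra). lra.
Qed.

Lemma sumZ_cauchy_schwarz (a b : seqZ) : l2Z a -> l2Z b ->
  sumZ (fun j => a j * b j) ^ 2
  <= sumZ (fun j => a j * a j) * sumZ (fun j => b j * b j).
Proof.
  intros Ha Hb. apply sq_le_of_quadratic_nonneg; [apply sumZ_sq_nonneg, Ha|]. intros t.
  assert (H : 0 <= sumZ (fun j => (t * a j - b j) * (t * a j - b j)))
    by (apply sumZ_sq_nonneg; l2_tac).
  rewrite (sumZ_ext _ (fun j => t ^ 2 * (a j * a j) - 2 * t * (a j * b j) + b j * b j))
    in H by (intros j; ring).
  rewrite sumZ_plus, sumZ_minus, !sumZ_scal in H by summable_tac. exact H.
Qed.

(** * Discrete summation by parts *)

Ltac normalize_indices f :=
  repeat match goal with |- context [f ?k] => progress ring_simplify k end.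

Lemma Dc_mult (dx : R) (a b : seqZ) (j : Z) : 0 < dx ->
  Dc dx (fun i => a i * b i) j = avg a j * Dc dx b j + avg b j * Dc dx a j.
Proof.
  intros Hdx. unfold Dc, Dp, Dm, avg. normalize_indices a. normalize_indices b. field. lra.
Qed.

Lemma Dc_sq_half (dx : R) (a : seqZ) (j : Z) : 0 < dx ->
  Dc dx (fun i => a i ^ 2 / 2) j = avg a j * Dc dx a j.
Proof. intros Hdx. unfold Dc, Dp, Dm, avg. normalize_indices a. field. lra. Qed.

(* Each identity below holds because the difference of its two summands is
   [phi (j+1) - phi j] for the displayed polynomial potential [phi]. *)
Section SummationByParts.
Variables (dx : R) (e w : seqZ).
Hypothesis Hdx : 0 < dx.
Hypothesis He : l2Z e.
Hypothesis Hw : l2Z w.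

Local Ltac telescope phi :=
  apply (sumZ_eq_telescope _ _ phi); [summable_tac|summable_tac|summable_tac|];
  intros j; unfold D3, Dc, Dp, Dm, avg; cbv beta;
  normalize_indices e; normalize_indices w; field; lra.

Lemma sumZ_e_D3 :
  sumZ (fun j => e j * D3 dx e j)
  = dx / 2 * sumZ (fun j => Dp dx (Dm dx e) j * Dp dx (Dm dx e) j).
Proof.
  rewrite <- sumZ_scal.
  telescope (fun j => (1/2 * e (j - 1)%Z * e (j - 1)%Z - e (j - 1)%Z * e j
    + e (j - 1)%Z * e (j + 1)%Z - 1/2 * e j * e j) / dx ^ 3).
Qed.

Lemma sumZ_e_DpDm :
  sumZ (fun j => e j * Dp dx (Dm dx e) j) = - sumZ (fun j => Dp dx e j * Dp dx e j).
Proof. rewrite <- sumZ_opp. telescope (fun j => (- e (j - 1)%Z * e j + e j * e j) / dx ^ 2). Qed.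

Lemma sumZ_D3_DpDm :
  sumZ (fun j => D3 dx e j * Dp dx (Dm dx e) j)
  = - (dx / 2) * sumZ (fun j => D3 dx e j * D3 dx e j).
Proof.
  rewrite <- sumZ_scal.
  telescope (fun j => (1/2 * e (j - 1)%Z * e (j - 1)%Z - 2 * e (j - 1)%Z * e j
    + e (j - 1)%Z * e (j + 1)%Z + 2 * e j * e j - 2 * e j * e (j + 1)%Z
    + 1/2 * e (j + 1)%Z * e (j + 1)%Z) / dx ^ 5).
Qed.

Lemma sumZ_Dp_sq :
  sumZ (fun j => Dp dx e j * Dp dx e j)
  = sumZ (fun j => Dc dx e j * Dc dx e j)
    + dx ^ 2 / 4 * sumZ (fun j => Dp dx (Dm dx e) j * Dp dx (Dm dx e) j).
Proof.
  rewrite <- sumZ_scal, <- sumZ_plus by summable_tac.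
  telescope (fun j => (1/2 * e (j - 1)%Z * e (j - 1)%Z - e (j - 1)%Z * e j
    + 1/2 * e j * e j) / dx ^ 2).
Qed.

Lemma sumZ_DpDm_sq :
  sumZ (fun j => Dp dx (Dm dx e) j * Dp dx (Dm dx e) j)
  = sumZ (fun j => Dp dx (Dc dx e) j * Dp dx (Dc dx e) j)
    + dx ^ 2 / 4 * sumZ (fun j => D3 dx e j * D3 dx e j).
Proof.
  rewrite <- sumZ_scal, <- sumZ_plus by summable_tac.
  telescope (fun j => (-1/2 * e (j - 1)%Z * e (j - 1)%Z + 2 * e (j - 1)%Z * e j
    - e (j - 1)%Z * e (j + 1)%Z - 2 * e j * e j + 2 * e j * e (j + 1)%Z
    - 1/2 * e (j + 1)%Z * e (j + 1)%Z) / dx ^ 4).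
Qed.

Lemma sumZ_DpDm_sq_Dp_D3 :
  sumZ (fun j => Dp dx (Dm dx e) j * Dp dx (Dm dx e) j)
  = - sumZ (fun j => Dp dx e j * D3 dx e j).
Proof.
  rewrite <- sumZ_opp.
  telescope (fun j => (- e (j - 1)%Z * e (j - 1)%Z + 3 * e (j - 1)%Z * e j
    - e (j - 1)%Z * e (j + 1)%Z - 2 * e j * e j + e j * e (j + 1)%Z) / dx ^ 4).
Qed.

Lemma sumZ_e_Dc_sq :
  sumZ (fun j => e j * Dc dx (fun i => e i ^ 2 / 2) j)
  = - (dx ^ 2 / 12) * sumZ (fun j => Dp dx e j ^ 3).
Proof.
  rewrite <- sumZ_scal.
  telescope (fun j => (-1/2 * e (j - 1)%Z * e (j - 1)%Z * e j
    - 1/6 * e j * e j * e j) / (-2 * dx)).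
Qed.

Lemma sumZ_e_Dc_mult :
  sumZ (fun j => e j * Dc dx (fun i => w i * e i) j)
  = sumZ (fun j => 1/2 * (e j * e (j + 1)%Z * Dp dx w j)).
Proof. telescope (fun j => e (j - 1)%Z * e j * w (j - 1)%Z / (2 * dx)). Qed.

Lemma sumZ_DpDm_Dc_mult :
  sumZ (fun j => Dp dx (Dm dx e) j * Dc dx (fun i => w i * e i) j)
  = sumZ (fun j => (e j * e (j + 2)%Z * (w (j + 2)%Z - w j)
                    + 2 * (e j * e (j + 1)%Z * (w j - w (j + 1)%Z))) / (2 * dx ^ 3)).
Proof.
  telescope (fun j => (e (j - 1)%Z * e (j - 1)%Z * w (j - 1)%Z
    - 2 * e (j - 1)%Z * e j * w (j - 1)%Z + e (j - 1)%Z * e (j + 1)%Z * w (j - 1)%Z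
    - e (j - 1)%Z * e (j + 1)%Z * w (j + 1)%Z + e j * e j * w j) / (2 * dx ^ 3)).
Qed.

Lemma sumZ_DpDm_Dc_sq :
  sumZ (fun j => Dp dx (Dm dx e) j * Dc dx (fun i => e i ^ 2 / 2) j - 1/6 * Dp dx e j ^ 3)
  = sumZ (fun j => - (e (j + 2)%Z - e j) ^ 3 / (12 * dx ^ 3)).
Proof.
  telescope (fun j => (1/4 * e (j - 1)%Z * e (j - 1)%Z * e (j - 1)%Z
    - 1/2 * e (j - 1)%Z * e (j - 1)%Z * e j
    + 1/4 * e (j - 1)%Z * e (j - 1)%Z * e (j + 1)%Z
    - 1/4 * e (j - 1)%Z * e (j + 1)%Z * e (j + 1)%Z
    + 1/6 * e j * e j * e j + 1/12 * e (j + 1)%Z * e (j + 1)%Z * e (j + 1)%Z) / dx ^ 3).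
Qed.

Lemma sumZ_D3_Dc_sq :
  sumZ (fun j => 2 * (D3 dx e j * Dc dx (fun i => e i ^ 2 / 2) j))
  = sumZ (fun j =>
      - e j * Dp dx (Dm dx e) j ^ 2
      - e (j - 1)%Z * Dp dx (Dm dx e) j * Dp dx (Dm dx e) (j - 1)%Z
      + Dp dx (Dm dx e) j ^ 2 * (5/6 * (e j - e (j - 1)%Z) + 1/6 * (e (j + 1)%Z - e j))
      + Dp dx (Dm dx e) j * Dp dx (Dm dx e) (j - 1)%Z * (e j - e (j - 2)%Z) / 2).
Proof.
  telescope (fun j => (-1/2 * e (j - 2)%Z * e (j - 2)%Z * e (j - 1)%Z
    + e (j - 2)%Z * e (j - 2)%Z * e j - 1/2 * e (j - 2)%Z * e (j - 2)%Z * e (j + 1)%Z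
    + 2/3 * e (j - 1)%Z * e (j - 1)%Z * e (j - 1)%Z - 2 * e (j - 1)%Z * e (j - 1)%Z * e j
    + 5/2 * e (j - 1)%Z * e j * e j - 5/3 * e j * e j * e j
    + 1/2 * e j * e j * e (j + 1)%Z) / dx ^ 4).
Qed.

Lemma sumZ_D3_avg_Dc :
  sumZ (fun j => 2 * (D3 dx e j * (avg w j * Dc dx e j)))
  = sumZ (fun j =>
      - 2 * avg w j * Dp dx (Dc dx e) (j - 1)%Z ^ 2
      + 1/2 * Dp dx (Dm dx e) j ^ 2 * (avg w (j + 1)%Z - avg w j)
      - 2 * Dp dx (Dm dx e) j * Dc dx e (j - 1)%Z * (avg w j - avg w (j - 1)%Z) / dx).
Proof.
  telescope (fun j => (-1/4 * e (j - 2)%Z * e (j - 2)%Z * w (j - 1)%Z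
    - 1/4 * e (j - 2)%Z * e (j - 2)%Z * w (j + 1)%Z - 1/2 * e (j - 2)%Z * e (j - 1)%Z * w (j - 2)%Z
    + e (j - 2)%Z * e (j - 1)%Z * w (j - 1)%Z - 1/2 * e (j - 2)%Z * e (j - 1)%Z * w j
    + e (j - 2)%Z * e (j - 1)%Z * w (j + 1)%Z + e (j - 2)%Z * e j * w (j - 2)%Z
    - 1/2 * e (j - 2)%Z * e j * w (j - 1)%Z + e (j - 2)%Z * e j * w j
    - 1/2 * e (j - 2)%Z * e j * w (j + 1)%Z - 1/2 * e (j - 2)%Z * e (j + 1)%Z * w (j - 2)%Z
    - 1/2 * e (j - 2)%Z * e (j + 1)%Z * w j - e (j - 1)%Z * e (j - 1)%Z * w (j - 1)%Z
    - e (j - 1)%Z * e (j - 1)%Z * w (j + 1)%Z + 1/2 * e (j - 1)%Z * e j * w (j - 2)%Z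
    + e (j - 1)%Z * e j * w (j - 1)%Z + 1/2 * e (j - 1)%Z * e j * w j
    + e (j - 1)%Z * e j * w (j + 1)%Z - e j * e j * w (j - 2)%Z
    - 1/4 * e j * e j * w (j - 1)%Z - e j * e j * w j - 1/4 * e j * e j * w (j + 1)%Z
    + 1/2 * e j * e (j + 1)%Z * w (j - 2)%Z + 1/2 * e j * e (j + 1)%Z * w j) / dx ^ 4).
Qed.

End SummationByParts.

(** * Scalar inequalities *)

Lemma Rmult_sq_le_abs (x y P : R) : Rabs x <= y -> x * (P * P) <= y * (P * P).
Proof. intros H. apply Rabs_le_between in H. pose proof (Rle_0_sqr P). nra. Qed.

Lemma Ropp_mult_le_young (x y P Q : R) :
  Rabs x <= y -> - (x * P * Q) <= y * (P * P + Q * Q) / 2.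
Proof.
  intros H. apply Rabs_le_between in H.
  assert (0 <= (y + x) * (P + Q) ^ 2) by (apply Rmult_le_pos; [lra|apply pow2_ge_0]).
  assert (0 <= (y - x) * (P - Q) ^ 2) by (apply Rmult_le_pos; [lra|apply pow2_ge_0]).
  nra.
Qed.

Lemma Rmult_le_young (x y P Q : R) :
  Rabs x <= y -> x * P * Q <= y * (P * P + Q * Q) / 2.
Proof.
  intros H. replace (x * P * Q) with (- ((- x) * P * Q)) by ring.
  apply Ropp_mult_le_young. rewrite Rabs_Ropp. exact H.
Qed.

Lemma second_difference_sq_le (x y z : R) :
  (x - 2 * y + z) ^ 2 <= 4 * (x * x + 2 * (y * y) + z * z).
Proof.
  pose proof (pow2_ge_0 (x - z)). pose proof (pow2_ge_0 (x + y)). pose proof (pow2_ge_0 (y + z)).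
  nra.
Qed.

Lemma Rabs_sum_sq_mult_diff_le (a b E : R) : Rabs a <= E -> Rabs b <= E ->
  Rabs ((a + b) ^ 2 * (a - b)) <= 4/3 * E * (a * a + b * b).
Proof.
  intros Ha Hb.
  assert (Huv : Rabs (a + b) + Rabs (a - b) <= 2 * E).
  { apply Rabs_le_between in Ha; apply Rabs_le_between in Hb.
    destruct (Rle_dec 0 (a + b)); destruct (Rle_dec 0 (a - b));
      [rewrite (Rabs_right (a + b)), (Rabs_right (a - b)) by lra
      |rewrite (Rabs_right (a + b)), (Rabs_left (a - b)) by lra
      |rewrite (Rabs_left (a + b)), (Rabs_right (a - b)) by lra
      |rewrite (Rabs_left (a + b)), (Rabs_left (a - b)) by lra]; lra. }
  assert (Hsq : a * a + b * b = (Rabs (a + b) ^ 2 + Rabs (a - b) ^ 2) / 2)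
    by (rewrite !pow2_abs; field).
  rewrite Rabs_mult, <- RPow_abs, Hsq.
  set (u := Rabs (a + b)) in *. set (v := Rabs (a - b)) in *.
  assert (0 <= u) by apply Rabs_pos. assert (0 <= v) by apply Rabs_pos.
  assert (0 <= u * (u - v) ^ 2) by (apply Rmult_le_pos; [lra|apply pow2_ge_0]).
  assert (0 <= v ^ 3) by (apply pow_le; lra).
  assert (2/3 * (u * u + v * v) * (2 * E) >= 2/3 * (u * u + v * v) * (u + v)) by nra.
  nra.
Qed.

(* The quantities [a, b, c, d] play the role of [e_(j+1), e_j, e_(j-1), e_(j-2)]. *)
Lemma cubic_D3_term_le (a b c d E P Q : R) :
  Rabs a <= E -> Rabs b <= E -> Rabs c <= E -> Rabs d <= E ->
  - b * P ^ 2 - c * P * Q + P ^ 2 * (5/6 * (b - c) + 1/6 * (a - b)) + P * Q * (b - d) / 2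
  <= 11/3 * E * P ^ 2 + E * Q ^ 2.
Proof.
  intros Ha Hb Hc Hd.
  assert (T1 : - b * (P * P) <= E * (P * P)).
  { apply Rmult_sq_le_abs. rewrite Rabs_Ropp. exact Hb. }
  assert (T2 : - (c * P * Q) <= E * (P * P + Q * Q) / 2) by (apply Ropp_mult_le_young; exact Hc).
  assert (T3 : (5/6 * (b - c) + 1/6 * (a - b)) * (P * P) <= 5/3 * E * (P * P)).
  { apply Rmult_sq_le_abs. apply Rabs_le_between in Ha; apply Rabs_le_between in Hb;
    apply Rabs_le_between in Hc. apply Rabs_le. lra. }
  assert (T4 : (b - d) / 2 * P * Q <= E * (P * P + Q * Q) / 2).
  { apply Rmult_le_young. apply Rabs_le_between in Hb; apply Rabs_le_between in Hd.
    apply Rabs_le. lra. }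
  pose proof (Rle_0_sqr P). pose proof (Rle_0_sqr Q). unfold Rsqr in *. nra.
Qed.

Lemma transport_D3_term_le (dx W W1 Wm M P Q U Up : R) : 0 < dx ->
  Rabs W <= U -> Rabs (W1 - W) <= dx * Up -> Rabs (W - Wm) <= dx * Up ->
  - 2 * W * M ^ 2 + 1/2 * P ^ 2 * (W1 - W) - 2 * P * Q * (W - Wm) / dx
  <= 2 * U * M ^ 2 + dx * Up / 2 * P ^ 2 + 2 * Up * (Rabs P * Rabs Q).
Proof.
  intros Hdx HW HW1 HWm.
  assert (T1 : - W * (M * M) <= U * (M * M))
    by (apply Rmult_sq_le_abs; rewrite Rabs_Ropp; exact HW).
  assert (T2 : (W1 - W) * (P * P) <= dx * Up * (P * P)) by (apply Rmult_sq_le_abs; exact HW1).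
  assert (T3 : - (P * Q * (W - Wm)) <= dx * Up * (Rabs P * Rabs Q)).
  { eapply Rle_trans; [apply Rle_abs|]. rewrite Rabs_Ropp, !Rabs_mult, Rmult_comm.
    apply Rmult_le_compat_r; [apply Rmult_le_pos; apply Rabs_pos|exact HWm]. }
  apply (Rmult_le_compat_r (/ dx)) in T3; [|left; apply Rinv_0_lt_compat; exact Hdx].
  replace (dx * Up * (Rabs P * Rabs Q) * / dx) with (Up * (Rabs P * Rabs Q)) in T3 by (field; lra).
  replace (- 2 * W * M ^ 2 + 1/2 * P ^ 2 * (W1 - W) - 2 * P * Q * (W - Wm) / dx)
    with (2 * (- W * (M * M)) + 1/2 * ((W1 - W) * (P * P)) + 2 * (- (P * Q * (W - Wm)) * / dx))
    by (field; lra).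
  lra.
Qed.

Lemma nonlinear_flux_sq_le (dx a b m Dw U Up E : R) : 0 < dx ->
  Rabs a <= E -> Rabs b <= E -> Rabs m <= U -> Rabs Dw <= Up ->
  ((m + (a + b) / 2) * ((a - b) / (2 * dx)) + (a + b) / 2 * Dw) ^ 2
  <= (U + E) ^ 2 * ((a - b) / (2 * dx)) ^ 2
     + (U * Up / (2 * dx) + Up * E / (3 * dx) + Up ^ 2 / 2) * (a * a + b * b).
Proof.
  intros Hdx Ha Hb Hm HDw.
  set (eb := (a + b) / 2). set (De := (a - b) / (2 * dx)).
  assert (Hinv : 0 < / (4 * dx)) by (apply Rinv_0_lt_compat; lra).
  assert (Hmeb : Rabs (m + eb) <= U + E).
  { apply Rabs_le_between in Ha; apply Rabs_le_between in Hb; apply Rabs_le_between in Hm.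
    apply Rabs_le. unfold eb. lra. }
  assert (A1 : (m + eb) ^ 2 * De ^ 2 <= (U + E) ^ 2 * De ^ 2).
  { apply Rmult_le_compat_r; [apply pow2_ge_0|].
    rewrite <- (pow2_abs (m + eb)). apply pow_incr. split; [apply Rabs_pos|exact Hmeb]. }
  assert (A2 : 2 * (m * Dw) * (eb * De) <= U * Up * (a * a + b * b) / (2 * dx)).
  { assert (Eeb : eb * De = (a * a - b * b) * / (4 * dx)) by (unfold eb, De; field; lra).
    assert (Hab : Rabs (a * a - b * b) <= a * a + b * b) by (apply Rabs_le; nra).
    rewrite Eeb. eapply Rle_trans; [apply Rle_abs|].
    rewrite !Rabs_mult, (Rabs_right 2), (Rabs_right (/ (4 * dx))) by lra.
    assert (Rabs m * Rabs Dw <= U * Up) by (apply Rmult_le_compat; auto; apply Rabs_pos).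
    assert (Rabs m * Rabs Dw * Rabs (a * a - b * b) <= U * Up * (a * a + b * b))
      by (apply Rmult_le_compat; auto; [apply Rmult_le_pos|]; apply Rabs_pos).
    replace (U * Up * (a * a + b * b) / (2 * dx))
      with (2 * (U * Up * (a * a + b * b)) * / (4 * dx)) by (field; lra).
    nra. }
  assert (A3 : 2 * (eb * eb) * De * Dw <= Up * E * (a * a + b * b) / (3 * dx)).
  { assert (Eeb2 : 2 * (eb * eb) * De * Dw = (a + b) ^ 2 * (a - b) * Dw * / (4 * dx))
      by (unfold eb, De; field; lra).
    pose proof (Rabs_sum_sq_mult_diff_le a b E Ha Hb) as HK.
    rewrite Eeb2. set (X := (a + b) ^ 2 * (a - b)) in *.
    eapply Rle_trans; [apply Rle_abs|].
    rewrite !Rabs_mult, (Rabs_right (/ (4 * dx))) by lra.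
    assert (Rabs X * Rabs Dw <= 4/3 * E * (a * a + b * b) * Up)
      by (apply Rmult_le_compat; auto; apply Rabs_pos).
    replace (Up * E * (a * a + b * b) / (3 * dx))
      with (4/3 * E * (a * a + b * b) * Up * / (4 * dx)) by (field; lra).
    nra. }
  assert (A4 : (eb * Dw) ^ 2 <= Up ^ 2 / 2 * (a * a + b * b)).
  { assert (Heb : eb * eb <= (a * a + b * b) / 2).
    { pose proof (Rle_0_sqr (a - b)). unfold Rsqr in *. unfold eb. nra. }
    apply Rabs_le_between in HDw.
    replace ((eb * Dw) ^ 2) with ((eb * eb) * (Dw * Dw)) by ring.
    replace (Up ^ 2 / 2 * (a * a + b * b)) with ((a * a + b * b) / 2 * (Up * Up)) by field.
    apply Rmult_le_compat; [apply Rle_0_sqr|apply Rle_0_sqr|exact Heb|nra]. }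
  replace (((m + eb) * De + eb * Dw) ^ 2)
    with ((m + eb) ^ 2 * De ^ 2 + 2 * (m * Dw) * (eb * De) + 2 * (eb * eb) * De * Dw
          + (eb * Dw) ^ 2) by ring.
  unfold Rdiv in *. lra.
Qed.

Lemma mult_le_of_sq_le_cross (P Q A T : R) : 0 <= P -> 0 <= Q -> 0 <= A -> 0 <= T ->
  Q * Q <= A * P -> P * P <= Q * T -> P * Q <= A * T.
Proof.
  intros HP HQ HA HT H1 H2.
  assert (H3 : (P * Q) * (P * Q) <= (A * T) * (P * Q)).
  { replace ((P * Q) * (P * Q)) with ((P * P) * (Q * Q)) by ring.
    replace ((A * T) * (P * Q)) with ((Q * T) * (A * P)) by ring.
    apply Rmult_le_compat; auto; nra. }
  destruct (Rle_or_lt (P * Q) 0) as [H|H]; [nra|].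
  apply (Rmult_le_reg_r (P * Q)); auto.
Qed.

Lemma two_mult_le_of_sq_le (A B X k : R) : 0 <= A -> 0 <= B -> X ^ 2 <= A * B ->
  2 * k * X <= A + k ^ 2 * B.
Proof.
  intros HA HB HX.
  assert (Hs : 0 <= A + k ^ 2 * B) by (pose proof (pow2_ge_0 k); nra).
  assert (H : (2 * k * X) ^ 2 <= (A + k ^ 2 * B) ^ 2)
    by (pose proof (pow2_ge_0 (A - k ^ 2 * B)); pose proof (pow2_ge_0 k); nra).
  destruct (Rle_or_lt (2 * k * X) 0); [lra|].
  apply Rsqr_incr_0_var; [unfold Rsqr in *; nra|exact Hs].
Qed.

Lemma dt_Up_sq_le (dt dx U Up : R) : 0 < dt -> 0 < dx -> 0 <= Up -> Up * dx <= 2 * U ->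
  dt * Up ^ 2 <= U ^ 2 + dt / dx * U * Up / 2 + dt ^ 2 / dx ^ 2 * Up ^ 2.
Proof.
  intros Hdt Hdx HUp HUpdx.
  set (t := dt / dx ^ 2). set (u := Up * dx / 2).
  assert (Ht : 0 < t) by (unfold t; apply Rdiv_lt_0_compat; [lra|apply pow_lt; lra]).
  assert (Hu : 0 <= u) by (unfold u; nra).
  replace (dt * Up ^ 2) with (4 * t * u ^ 2) by (unfold t, u; field; lra).
  replace (dt / dx * U * Up / 2) with (t * U * u) by (unfold t, u; field; lra).
  replace (dt ^ 2 / dx ^ 2 * Up ^ 2) with (4 * t ^ 2 * u ^ 2) by (unfold t, u; field; lra).
  assert (t * u * u <= t * U * u)
    by (apply Rmult_le_compat_r; [|apply Rmult_le_compat_l]; unfold u in *; lra).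
  assert (u * u <= U * U) by (apply Rmult_le_compat; unfold u in *; lra).
  assert (0 <= u * u * ((2 * t - 3/4) ^ 2 + 7/16))
    by (apply Rmult_le_pos; [apply Rle_0_sqr|pose proof (pow2_ge_0 (2 * t - 3/4)); lra]).
  nra.
Qed.

Lemma Xq_ge (gamma dx E : R) : 0 < dx -> 0 <= E -> 7 * E <= Xq gamma dx E.
Proof.
  intros Hdx HE. unfold Xq.
  replace (gamma - 1/2) with (- (1/2 - gamma)) by ring. rewrite Rpower_Ropp.
  assert (Hr : 0 < Rpower dx (1/2 - gamma)) by apply exp_pos.
  set (r := Rpower dx (1/2 - gamma)) in *.
  assert (Hsq : r + 9 * E ^ 2 * / r - 6 * E = (r - 3 * E) ^ 2 / r) by (field; lra).
  assert (0 <= (r - 3 * E) ^ 2 / r) by (apply Rdiv_le_0_compat; [apply pow2_ge_0|exact Hr]).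
  lra.
Qed.

(* Young's inequality absorbs every product with [eps]: the right side minus the
   left side is [dt (B + eps)^2 + 2 dt^2/dx (eps + c dx^2 L/4)^2
   + dt^2/dx ((eps - dx h1)^2 + (eps - dx h2)^2)]. *)
Lemma error_update_sq_le (c theta dt dx e0 T L h1 h2 eps : R) : 0 < dt -> 0 < dx ->
  let B := e0 - (1 - theta) * dt * T in
  let g := h1 + h2 - c * dx / 2 * L in
  (e0 + theta * dt * T - dt * (T + (h1 + h2) - c * dx / 2 * L + eps)) ^ 2
  <= (1 + dt) * B ^ 2 - 2 * dt * B * g + dt ^ 2 * g ^ 2
     + dt * (1 + 4 * (dt / dx) + dt) * eps ^ 2 + dt ^ 2 * dx * (h1 ^ 2 + h2 ^ 2)
     + c ^ 2 * dt ^ 2 * dx ^ 3 / 8 * L ^ 2.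
Proof.
  intros Hdt Hdx B g.
  match goal with |- ?lhs <= ?rhs =>
    assert (Hgap : rhs - lhs = dt * (B + eps) ^ 2
                               + 2 * (dt ^ 2 / dx) * (eps + c * dx ^ 2 * L / 4) ^ 2
                               + dt ^ 2 / dx * (eps - dx * h1) ^ 2
                               + dt ^ 2 / dx * (eps - dx * h2) ^ 2)
      by (unfold B, g; field; lra)
  end.
  assert (0 <= dt ^ 2 / dx) by (apply Rdiv_le_0_compat; [apply pow2_ge_0|lra]).
  pose proof (pow2_ge_0 (B + eps)). pose proof (pow2_ge_0 (eps + c * dx ^ 2 * L / 4)).
  pose proof (pow2_ge_0 (eps - dx * h1)). pose proof (pow2_ge_0 (eps - dx * h2)).
  nra.
Qed.

Lemma energy_slack_nonneg (c th dt dx U Up E X sq Se ST SL SM : R) :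
  0 < c -> 0 < dt -> 0 < dx -> 1/2 <= th <= 1 -> 0 <= U -> 0 <= Up -> 0 <= E ->
  7 * E <= X -> 0 <= sq -> Up * dx <= 2 * U ->
  0 <= Se -> 0 <= ST -> 0 <= SL -> 0 <= SM ->
  let Ea' := U ^ 2 * (1 + dt / dx) + Up * (dt / dx * (2 * c + 2/3 * E + 3/2 * U))
             + Up ^ 2 * (sq + dt ^ 2 / dx ^ 2) + 2 * c ^ 2 * dt / dx in
  0 <= dt ^ 2 * dx * SL + (2 * th - 1) * dt ^ 3 * ST
       + (1 - th) * dt ^ 2 * ((2 * E + 1 + X - 14/3 * E) * SM
                              + dx ^ 2 / 4 * (1 + X - 14/3 * E) * ST)
       + dt * Ea' * (th * dt * dx * SL + th ^ 2 * dt ^ 2 * ST)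
       + dt * (U ^ 2 + 4 * Up + dt / dx * U * Up / 2 + Up ^ 2 * sq + Up ^ 2 * (dt ^ 2 / dx ^ 2)
               - dt * Up ^ 2) * Se
       + dt * Up * (7 * th * dt * dx - (1 - th) * dt * dx / 2) * SL
       + dt * Up * (7 * th ^ 2 * dt ^ 2 - 2 * (1 - th) ^ 2 * dt ^ 2) * ST.
Proof.
  intros Hc Hdt Hdx Hth HU HUp HE HX Hsq HUpdx HSe HST HSL HSM Ea'.
  assert (Hdt2 : 0 <= dt ^ 2) by apply pow2_ge_0.
  assert (Hdx2 : 0 <= dx ^ 2) by apply pow2_ge_0.
  assert (Hlam : 0 <= dt / dx) by (apply Rdiv_le_0_compat; lra).
  assert (HEa' : 0 <= Ea').
  { assert (0 <= dt ^ 2 / dx ^ 2) by (apply Rdiv_le_0_compat; [lra|apply pow_lt; lra]).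
    assert (0 <= 2 * c ^ 2 * dt / dx)
      by (apply Rdiv_le_0_compat; [pose proof (pow2_ge_0 c); nra|lra]).
    assert (0 <= U ^ 2 * (1 + dt / dx)) by (apply Rmult_le_pos; [apply pow2_ge_0|lra]).
    assert (0 <= Up * (dt / dx * (2 * c + 2/3 * E + 3/2 * U)))
      by (apply Rmult_le_pos; [lra|apply Rmult_le_pos; lra]).
    assert (0 <= Up ^ 2 * (sq + dt ^ 2 / dx ^ 2)) by (apply Rmult_le_pos; [apply pow2_ge_0|lra]).
    unfold Ea'. lra. }
  assert (0 <= dt ^ 2 * dx * SL + (2 * th - 1) * dt ^ 3 * ST).
  { apply Rplus_le_le_0_compat; apply Rmult_le_pos; try lra;
      apply Rmult_le_pos; try lra; apply pow_le; lra. }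
  assert (0 <= (1 - th) * dt ^ 2 * ((2 * E + 1 + X - 14/3 * E) * SM
                                    + dx ^ 2 / 4 * (1 + X - 14/3 * E) * ST)).
  { apply Rmult_le_pos; [apply Rmult_le_pos; lra|].
    apply Rplus_le_le_0_compat; apply Rmult_le_pos; try lra. apply Rmult_le_pos; lra. }
  assert (0 <= dt * Ea' * (th * dt * dx * SL + th ^ 2 * dt ^ 2 * ST)).
  { apply Rmult_le_pos; [apply Rmult_le_pos; lra|].
    apply Rplus_le_le_0_compat; apply Rmult_le_pos; try lra;
      apply Rmult_le_pos; try lra; [apply Rmult_le_pos; lra|apply pow2_ge_0]. }
  assert (0 <= dt * (U ^ 2 + 4 * Up + dt / dx * U * Up / 2 + Up ^ 2 * sq
                     + Up ^ 2 * (dt ^ 2 / dx ^ 2) - dt * Up ^ 2) * Se).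
  { pose proof (dt_Up_sq_le dt dx U Up Hdt Hdx HUp HUpdx).
    assert (0 <= Up ^ 2 * sq) by (apply Rmult_le_pos; [apply pow2_ge_0|lra]).
    apply Rmult_le_pos; [|lra]. apply Rmult_le_pos; [lra|]. lra. }
  assert (0 <= dt * Up * (7 * th * dt * dx - (1 - th) * dt * dx / 2) * SL).
  { apply Rmult_le_pos; [|lra]. apply Rmult_le_pos; [apply Rmult_le_pos; lra|].
    assert (0 <= dt * dx) by (apply Rmult_le_pos; lra). nra. }
  assert (0 <= dt * Up * (7 * th ^ 2 * dt ^ 2 - 2 * (1 - th) ^ 2 * dt ^ 2) * ST).
  { apply Rmult_le_pos; [|lra]. apply Rmult_le_pos; [apply Rmult_le_pos; lra|]. nra. }
  lra.
Qed.

(* [Se, ST, SL, SR, SM, SQ] stand for the sums of squares of [e], [D+D+D- e],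
   [D+D- e], [D e], [D+D e], [D+ e]; [S3] for the sum of [(D+ e)^3]; the other
   [S..] are the sums of the products named by their suffixes, with
   [h1 = D(w e)] and [h2 = D(e^2/2)]. *)
Lemma energy_inequality_of_sums (c th gamma dt dx U Up E : R)
    (Se ST SL SR SM SQ S3 Seps Sa SeT SeL STL Seh1 Seh2 STg SLh1 SLh2 Sg Sh1 Sh2
     Xabs STB : R) :
  0 < c -> 0 < dt -> 0 < dx -> 1/2 <= th <= 1 -> 0 <= U -> 0 <= Up -> 0 <= E ->
  Up * dx <= 2 * U ->
  0 <= Se -> 0 <= ST -> 0 <= SL -> 0 <= SR -> 0 <= SM ->
  Sa = Se + 2 * th * dt * SeT + th ^ 2 * dt ^ 2 * ST ->
  SeT = dx / 2 * SL -> SeL = - SQ -> STL = - (dx / 2) * ST ->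
  SQ = SR + dx ^ 2 / 4 * SL -> SL = SM + dx ^ 2 / 4 * ST -> Seh2 = - (dx ^ 2 / 12) * S3 ->
  SL <= 16 / dx ^ 4 * Se -> Sh1 <= U ^ 2 / dx ^ 2 * Se -> Sh2 <= E ^ 2 * SR ->
  - (Up / 2) * Se <= Seh1 -> - (2 * Up / dx ^ 2) * Se <= SLh1 ->
  - (2 * E / (3 * dx)) * SR <= SLh2 - 1/6 * S3 ->
  Sg <= (U + E) ^ 2 * SR + (U * Up / dx + 2 * Up * E / (3 * dx) + Up ^ 2) * Se ->
  STg <= 2 * U * SM + (14/3 * E + dx * Up / 2) * SL + 2 * Up * Xabs + STB ->
  (1 - th) * dt * STB <= Up * (((1 - th) * dt) ^ 2 * ST + Se) ->
  Xabs ^ 2 <= Se * ST ->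
  (1 + dt) * Se - 2 * (1 + dt) * (1 - th) * dt * SeT + (1 + dt) * (1 - th) ^ 2 * dt ^ 2 * ST
  - 2 * dt * Seh1 - 2 * dt * Seh2 + c * dt * dx * SeL + (1 - th) * dt ^ 2 * STg
  - c * (1 - th) * dt ^ 2 * dx * STL + dt ^ 2 * Sg - c * dt ^ 2 * dx * SLh1
  - c * dt ^ 2 * dx * SLh2 + c ^ 2 * dt ^ 2 * dx ^ 2 / 4 * SL
  + dt * (1 + 4 * (dt / dx) + dt) * Seps + dt ^ 2 * dx * Sh1 + dt ^ 2 * dx * Sh2
  + c ^ 2 * dt ^ 2 * dx ^ 3 / 8 * SL
  <= Sa * (1 + dt * Ea c dt dx U Up E) + dt * Seps * (1 + 4 * (dt / dx) + dt)
     + dt * ((dx - c * dt) * (dx / 6 * S3) - (dx - c * dt) * c * SQ)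
     + dt ^ 2 * Bc c dx U E * SR + dt * Be th gamma dt dx U E * SM
     + dt * Bf c th gamma dt dx E * ST.
Proof.
  intros Hc Hdt Hdx Hth HU HUp HE HUpdx HSe HST HSL HSR HSM Ha I1 I2 I3 I4 I5 I6
    B1 B2 B3 B4 B5 B6 B7 B8 B9 B10.
  assert (HX := Xq_ge gamma dx E Hdx HE).
  assert (Hsq : 0 <= sqrt 2 * sqrt dt / sqrt dx)
    by (apply Rdiv_le_0_compat; [apply Rmult_le_pos; apply sqrt_pos|apply sqrt_lt_R0, Hdx]).
  assert (Hk : 0 <= (1 - th) * dt) by (apply Rmult_le_pos; lra).
  pose proof (two_mult_le_of_sq_le Se ST Xabs ((1 - th) * dt) HSe HST B10) as HXabs.
  pose proof (energy_slack_nonneg c th dt dx U Up E (Xq gamma dx E) (sqrt 2 * sqrt dt / sqrt dx)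
                Se ST SL SM Hc Hdt Hdx Hth HU HUp HE HX Hsq HUpdx HSe HST HSL HSM) as Hslack.
  unfold Ea, Bc, Be, Bf. cbv zeta in Hslack.
  set (X := Xq gamma dx E) in *. set (sq := sqrt 2 * sqrt dt / sqrt dx) in *.
  set (G1 := dt ^ 2 * ((U + E) ^ 2 * SR + (U * Up / dx + 2 * Up * E / (3 * dx) + Up ^ 2) * Se
                      - Sg)).
  set (G2 := 2 * dt * (Seh1 + Up / 2 * Se)).
  set (G3 := (1 - th) * dt ^ 2 * (2 * U * SM + (14/3 * E + dx * Up / 2) * SL + 2 * Up * Xabs
                                  + STB - STg)).
  set (G4 := c * dt ^ 2 * dx * (SLh1 + 2 * Up / dx ^ 2 * Se)).
  set (G5 := c * dt ^ 2 * dx * (SLh2 - 1/6 * S3 + 2 * E / (3 * dx) * SR)).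
  set (G6 := c ^ 2 * dt ^ 2 * dx ^ 3 / 8 * (16 / dx ^ 4 * Se - SL)).
  set (G7 := dt ^ 2 * dx * (U ^ 2 / dx ^ 2 * Se - Sh1)).
  set (G8 := dt ^ 2 * dx * (E ^ 2 * SR - Sh2)).
  set (G9 := dt * (Up * (((1 - th) * dt) ^ 2 * ST + Se) - (1 - th) * dt * STB)).
  set (G10 := dt * (Up * (Se + ((1 - th) * dt) ^ 2 * ST) - 2 * ((1 - th) * dt) * Xabs * Up)).
  match type of Hslack with 0 <= ?slack =>
  match goal with |- ?lhs <= ?rhs =>
    assert (Hgap : rhs - lhs = G1 + G2 + G3 + G4 + G5 + G6 + G7 + G8 + G9 + G10 + slack)
  end end.
  { assert (ESM : SM = SL - dx ^ 2 / 4 * ST) by lra.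
    unfold G1, G2, G3, G4, G5, G6, G7, G8, G9, G10.
    rewrite Ha, I1, I2, I3, I6, I4, ESM. field. lra. }
  assert (0 <= G1) by (apply Rmult_le_pos; [apply pow2_ge_0|lra]).
  assert (0 <= G2) by (apply Rmult_le_pos; lra).
  assert (0 <= G3) by (apply Rmult_le_pos; [apply Rmult_le_pos; [lra|apply pow2_ge_0]|lra]).
  assert (0 <= c * dt ^ 2 * dx)
    by (apply Rmult_le_pos; [apply Rmult_le_pos|]; try lra; apply pow2_ge_0).
  assert (0 <= G4) by (apply Rmult_le_pos; [lra|unfold Rdiv in *; lra]).
  assert (0 <= G5) by (apply Rmult_le_pos; [lra|unfold Rdiv in *; lra]).
  assert (0 <= G6).
  { apply Rmult_le_pos; [|lra]. apply Rdiv_le_0_compat; [|lra].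
    apply Rmult_le_pos; [apply Rmult_le_pos|]; try apply pow2_ge_0. apply pow_le; lra. }
  assert (0 <= dt ^ 2 * dx) by (apply Rmult_le_pos; [apply pow2_ge_0|lra]).
  assert (0 <= G7) by (apply Rmult_le_pos; lra).
  assert (0 <= G8) by (apply Rmult_le_pos; lra).
  assert (0 <= G9) by (apply Rmult_le_pos; lra).
  assert (0 <= G10).
  { apply Rmult_le_pos; [lra|].
    assert (2 * ((1 - th) * dt) * Xabs * Up <= (Se + ((1 - th) * dt) ^ 2 * ST) * Up)
      by (apply Rmult_le_compat_r; lra).
    lra. }
  lra.
Qed.

(** * Estimates of the nonlinear terms *)

Lemma Rabs_avg_le (a : seqZ) (M : R) (j : Z) :
  (forall i, Rabs (a i) <= M) -> Rabs (avg a j) <= M.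
Proof.
  intros HM. pose proof (HM (j + 1)%Z) as H1. pose proof (HM (j - 1)%Z) as H2.
  apply Rabs_le_between in H1; apply Rabs_le_between in H2.
  apply Rabs_le. unfold avg. lra.
Qed.

Section Estimates.
Variables (dx U Up E : R) (e w : seqZ).
Hypothesis Hdx : 0 < dx.
Hypothesis He : l2Z e.
Hypothesis Hw : l2Z w.
Hypothesis HU : forall j, Rabs (w j) <= U.
Hypothesis HUp : forall j, Rabs (Dp dx w j) <= Up.
Hypothesis HE : forall j, Rabs (e j) <= E.

Local Ltac unfold_differences :=
  unfold D3, Dc, Dp, Dm, avg; cbv beta; normalize_indices e; normalize_indices w.

Lemma Rabs_w_diff_le (j : Z) : Rabs (w (j + 1)%Z - w j) <= dx * Up.
Proof.
  replace (w (j + 1)%Z - w j) with (dx * Dp dx w j) by (unfold Dp; field; lra).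
  rewrite Rabs_mult, Rabs_right by lra. apply Rmult_le_compat_l; [lra|apply HUp].
Qed.

Lemma Rabs_Dc_w_le (j : Z) : Rabs (Dc dx w j) <= Up.
Proof.
  pose proof (HUp j) as H1. pose proof (HUp (j - 1)%Z) as H2.
  apply Rabs_le_between in H1; apply Rabs_le_between in H2.
  replace (Dc dx w j) with ((Dp dx w j + Dp dx w (j - 1)%Z) / 2)
    by (unfold_differences; field; lra).
  apply Rabs_le. lra.
Qed.

Lemma Rabs_avg_w_diff_le (j : Z) : Rabs (avg w (j + 1)%Z - avg w j) <= dx * Up.
Proof.
  pose proof (Rabs_w_diff_le (j + 1)%Z) as H1. pose proof (Rabs_w_diff_le (j - 1)%Z) as H2.
  replace (j + 1 + 1)%Z with (j + 2)%Z in H1 by lia. replace (j - 1 + 1)%Z with j in H2 by lia.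
  apply Rabs_le_between in H1; apply Rabs_le_between in H2.
  apply Rabs_le. unfold avg. replace (j + 1 + 1)%Z with (j + 2)%Z by lia.
  replace (j + 1 - 1)%Z with j by lia. lra.
Qed.

Lemma sumZ_DpDm_sq_le :
  sumZ (fun j => Dp dx (Dm dx e) j * Dp dx (Dm dx e) j) <= 16 / dx ^ 4 * sumZ (fun j => e j * e j).
Proof.
  apply Rle_trans with (sumZ (fun j => 4 / dx ^ 4 * (e (j + 1)%Z * e (j + 1)%Z
                                     + 2 * (e j * e j) + e (j - 1)%Z * e (j - 1)%Z))).
  - apply sumZ_le; [summable_tac|summable_tac|]. intros j.
    replace (Dp dx (Dm dx e) j * Dp dx (Dm dx e) j)
      with ((e (j + 1)%Z - 2 * e j + e (j - 1)%Z) ^ 2 / dx ^ 4) by (unfold_differences; field; lra).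
    unfold Rdiv. rewrite (Rmult_comm 4), Rmult_assoc, (Rmult_comm (/ dx ^ 4)).
    apply Rmult_le_compat_r; [left; apply Rinv_0_lt_compat, pow_lt, Hdx|].
    apply second_difference_sq_le.
  - apply Req_le. distribute_sumZ.
    rewrite (sumZ_sq_shift e 1), (sumZ_sq_shift_sub e 1) by assumption. field. lra.
Qed.

Lemma sumZ_Dc_mult_sq_le :
  sumZ (fun j => Dc dx (fun i => w i * e i) j * Dc dx (fun i => w i * e i) j)
  <= U ^ 2 / dx ^ 2 * sumZ (fun j => e j * e j).
Proof.
  apply Rle_trans with (sumZ (fun j => U ^ 2 / (2 * dx ^ 2)
                                     * (e (j + 1)%Z * e (j + 1)%Z + e (j - 1)%Z * e (j - 1)%Z))).
  - apply sumZ_le; [summable_tac|summable_tac|]. intros j.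
    replace (Dc dx (fun i => w i * e i) j * Dc dx (fun i => w i * e i) j)
      with ((w (j + 1)%Z * e (j + 1)%Z - w (j - 1)%Z * e (j - 1)%Z) ^ 2 / (4 * dx ^ 2))
      by (unfold_differences; field; lra).
    pose proof (HU (j + 1)%Z) as H1. pose proof (HU (j - 1)%Z) as H2.
    apply Rabs_le_between in H1; apply Rabs_le_between in H2.
    assert (Hdx2 : 0 < dx ^ 2) by (apply pow_lt, Hdx).
    apply (Rmult_le_reg_r (4 * dx ^ 2)); [lra|].
    replace ((w (j + 1)%Z * e (j + 1)%Z - w (j - 1)%Z * e (j - 1)%Z) ^ 2 / (4 * dx ^ 2)
             * (4 * dx ^ 2))
      with ((w (j + 1)%Z * e (j + 1)%Z - w (j - 1)%Z * e (j - 1)%Z) ^ 2) by (field; lra).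
    replace (U ^ 2 / (2 * dx ^ 2) * (e (j + 1)%Z * e (j + 1)%Z + e (j - 1)%Z * e (j - 1)%Z)
             * (4 * dx ^ 2))
      with (2 * U ^ 2 * (e (j + 1)%Z * e (j + 1)%Z + e (j - 1)%Z * e (j - 1)%Z)) by (field; lra).
    pose proof (pow2_ge_0 (w (j + 1)%Z * e (j + 1)%Z + w (j - 1)%Z * e (j - 1)%Z)).
    assert (w (j + 1)%Z ^ 2 <= U ^ 2) by nra. assert (w (j - 1)%Z ^ 2 <= U ^ 2) by nra.
    nra.
  - apply Req_le. distribute_sumZ.
    rewrite (sumZ_sq_shift e 1), (sumZ_sq_shift_sub e 1) by assumption. field. lra.
Qed.

Lemma sumZ_Dc_sq_half_sq_le :
  sumZ (fun j => Dc dx (fun i => e i ^ 2 / 2) j * Dc dx (fun i => e i ^ 2 / 2) j)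
  <= E ^ 2 * sumZ (fun j => Dc dx e j * Dc dx e j).
Proof.
  rewrite <- sumZ_scal. apply sumZ_le; [summable_tac|summable_tac|]. intros j.
  rewrite Dc_sq_half by exact Hdx.
  pose proof (Rabs_avg_le e E j HE) as Havg. apply Rabs_le_between in Havg.
  pose proof (Rle_0_sqr (Dc dx e j)). unfold Rsqr in *.
  assert (avg e j * avg e j <= E ^ 2) by nra. nra.
Qed.

Lemma sumZ_e_Dc_mult_ge :
  - (Up / 2) * sumZ (fun j => e j * e j) <= sumZ (fun j => e j * Dc dx (fun i => w i * e i) j).
Proof.
  rewrite (sumZ_e_Dc_mult dx e w Hdx He Hw).
  apply Rle_trans with (sumZ (fun j => - (Up / 4) * (e j * e j + e (j + 1)%Z * e (j + 1)%Z))).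
  - apply Req_le. distribute_sumZ. rewrite (sumZ_sq_shift e 1) by assumption. field.
  - apply sumZ_le; [summable_tac|summable_tac|]. intros j.
    pose proof (Ropp_mult_le_young (Dp dx w j) Up (e j) (e (j + 1)%Z) (HUp j)). lra.
Qed.

Lemma sumZ_DpDm_Dc_mult_ge :
  - (2 * Up / dx ^ 2) * sumZ (fun j => e j * e j)
  <= sumZ (fun j => Dp dx (Dm dx e) j * Dc dx (fun i => w i * e i) j).
Proof.
  rewrite (sumZ_DpDm_Dc_mult dx e w Hdx He Hw).
  apply Rle_trans with (sumZ (fun j => - (Up / (2 * dx ^ 2)) * (2 * (e j * e j)
                           + e (j + 2)%Z * e (j + 2)%Z + e (j + 1)%Z * e (j + 1)%Z))).
  - apply Req_le. distribute_sumZ.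
    rewrite (sumZ_sq_shift e 1), (sumZ_sq_shift e 2) by assumption. field. lra.
  - apply sumZ_le; [summable_tac|summable_tac|]. intros j.
    assert (Hw2 : Rabs (w (j + 2)%Z - w j) <= 2 * (dx * Up)).
    { pose proof (Rabs_w_diff_le (j + 1)%Z) as H1. pose proof (Rabs_w_diff_le j) as H2.
      replace (j + 1 + 1)%Z with (j + 2)%Z in H1 by lia.
      apply Rabs_le_between in H1; apply Rabs_le_between in H2. apply Rabs_le. lra. }
    assert (Hw1 : Rabs (w j - w (j + 1)%Z) <= dx * Up)
      by (rewrite Rabs_minus_sym; apply Rabs_w_diff_le).
    pose proof (Ropp_mult_le_young _ _ (e j) (e (j + 2)%Z) Hw2).
    pose proof (Ropp_mult_le_young _ _ (e j) (e (j + 1)%Z) Hw1).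
    assert (Hdx3 : 0 < 2 * dx ^ 3) by (pose proof (pow_lt dx 3 Hdx); lra).
    apply (Rmult_le_reg_r (2 * dx ^ 3)); [exact Hdx3|].
    field_simplify; [|lra|lra]. nra.
Qed.

Lemma sumZ_DpDm_Dc_sq_ge :
  - (2 * E / (3 * dx)) * sumZ (fun j => Dc dx e j * Dc dx e j)
  <= sumZ (fun j => Dp dx (Dm dx e) j * Dc dx (fun i => e i ^ 2 / 2) j)
     - 1/6 * sumZ (fun j => Dp dx e j ^ 3).
Proof.
  rewrite <- (sumZ_scal (1/6) (fun j => Dp dx e j ^ 3)), <- sumZ_minus by summable_tac.
  rewrite (sumZ_DpDm_Dc_sq dx e Hdx He).
  rewrite <- (sumZ_sq_shift (Dc dx e) 1) by l2_tac. rewrite <- sumZ_scal.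
  apply sumZ_le; [summable_tac|summable_tac|]. intros j.
  replace (Dc dx e (j + 1)%Z) with ((e (j + 2)%Z - e j) / (2 * dx))
    by (unfold_differences; field; lra).
  set (z := e (j + 2)%Z - e j).
  assert (Hz : Rabs z <= 2 * E).
  { pose proof (HE (j + 2)%Z) as H1. pose proof (HE j) as H2.
    apply Rabs_le_between in H1; apply Rabs_le_between in H2. apply Rabs_le. unfold z. lra. }
  apply Rabs_le_between in Hz.
  assert (z ^ 3 <= 2 * E * (z * z)) by (pose proof (Rle_0_sqr z); unfold Rsqr in *; nra).
  assert (Hdx3 : 0 < 12 * dx ^ 3) by (pose proof (pow_lt dx 3 Hdx); lra).
  apply (Rmult_le_reg_r (12 * dx ^ 3)); [exact Hdx3|].
  replace (- (2 * E / (3 * dx)) * (z / (2 * dx) * (z / (2 * dx))) * (12 * dx ^ 3))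
    with (- (2 * E * (z * z))) by (field; lra).
  replace (- z ^ 3 / (12 * dx ^ 3) * (12 * dx ^ 3)) with (- z ^ 3) by (field; lra).
  lra.
Qed.

Lemma sumZ_nonlinear_flux_sq_le :
  sumZ (fun j => (Dc dx (fun i => w i * e i) j + Dc dx (fun i => e i ^ 2 / 2) j)
                 * (Dc dx (fun i => w i * e i) j + Dc dx (fun i => e i ^ 2 / 2) j))
  <= (U + E) ^ 2 * sumZ (fun j => Dc dx e j * Dc dx e j)
     + (U * Up / dx + 2 * Up * E / (3 * dx) + Up ^ 2) * sumZ (fun j => e j * e j).
Proof.
  apply Rle_trans with (sumZ (fun j => (U + E) ^ 2 * (Dc dx e j * Dc dx e j)
      + (U * Up / (2 * dx) + Up * E / (3 * dx) + Up ^ 2 / 2)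
        * (e (j + 1)%Z * e (j + 1)%Z + e (j - 1)%Z * e (j - 1)%Z))).
  - apply sumZ_le; [summable_tac|summable_tac|]. intros j.
    rewrite Dc_mult, Dc_sq_half by exact Hdx.
    replace (avg e j) with ((e (j + 1)%Z + e (j - 1)%Z) / 2) by reflexivity.
    replace (Dc dx e j) with ((e (j + 1)%Z - e (j - 1)%Z) / (2 * dx))
      by (unfold_differences; field; lra).
    pose proof (nonlinear_flux_sq_le dx (e (j + 1)%Z) (e (j - 1)%Z) (avg w j) (Dc dx w j) U Up E
                  Hdx (HE _) (HE _) (Rabs_avg_le w U j HU) (Rabs_Dc_w_le j)) as H.
    match type of H with ?l <= ?r =>
      apply Rle_trans with l; [right; ring|eapply Rle_trans; [exact H|right; ring]] end.
  - apply Req_le. distribute_sumZ.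
    rewrite (sumZ_sq_shift e 1), (sumZ_sq_shift_sub e 1) by assumption. field. lra.
Qed.

Lemma sumZ_D3_Dc_sq_le :
  sumZ (fun j => 2 * (D3 dx e j * Dc dx (fun i => e i ^ 2 / 2) j))
  <= 14/3 * E * sumZ (fun j => Dp dx (Dm dx e) j * Dp dx (Dm dx e) j).
Proof.
  rewrite (sumZ_D3_Dc_sq dx e Hdx He).
  apply Rle_trans with (sumZ (fun j => 11/3 * E * Dp dx (Dm dx e) j ^ 2
                                     + E * Dp dx (Dm dx e) (j - 1)%Z ^ 2)).
  - apply sumZ_le; [summable_tac|summable_tac|]. intros j.
    apply cubic_D3_term_le; apply HE.
  - apply Req_le.
    rewrite (sumZ_ext (fun j => 11/3 * E * Dp dx (Dm dx e) j ^ 2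
                                + E * Dp dx (Dm dx e) (j - 1)%Z ^ 2)
               (fun j => 11/3 * E * (Dp dx (Dm dx e) j * Dp dx (Dm dx e) j)
      + E * (Dp dx (Dm dx e) (j - 1)%Z * Dp dx (Dm dx e) (j - 1)%Z))) by (intros j; ring).
    distribute_sumZ. rewrite (sumZ_sq_shift_sub (Dp dx (Dm dx e)) 1) by l2_tac. field.
Qed.

Lemma sumZ_D3_avg_Dc_le :
  sumZ (fun j => 2 * (D3 dx e j * (avg w j * Dc dx e j)))
  <= 2 * U * sumZ (fun j => Dp dx (Dc dx e) j * Dp dx (Dc dx e) j)
     + dx * Up / 2 * sumZ (fun j => Dp dx (Dm dx e) j * Dp dx (Dm dx e) j)
     + 2 * Up * sumZ (fun j => Rabs (Dp dx (Dm dx e) j) * Rabs (Dc dx e (j - 1)%Z)).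
Proof.
  rewrite (sumZ_D3_avg_Dc dx e w Hdx He Hw).
  apply Rle_trans with (sumZ (fun j =>
      2 * U * (Dp dx (Dc dx e) (j - 1)%Z * Dp dx (Dc dx e) (j - 1)%Z)
      + dx * Up / 2 * (Dp dx (Dm dx e) j * Dp dx (Dm dx e) j)
      + 2 * Up * (Rabs (Dp dx (Dm dx e) j) * Rabs (Dc dx e (j - 1)%Z)))).
  - apply sumZ_le; [summable_tac|summable_tac|]. intros j.
    assert (Hdiff : Rabs (avg w j - avg w (j - 1)%Z) <= dx * Up).
    { pose proof (Rabs_avg_w_diff_le (j - 1)%Z) as H.
      replace (j - 1 + 1)%Z with j in H by lia. exact H. }
    pose proof (transport_D3_term_le dx (avg w j) (avg w (j + 1)%Z) (avg w (j - 1)%Z)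
                  (Dp dx (Dc dx e) (j - 1)%Z) (Dp dx (Dm dx e) j) (Dc dx e (j - 1)%Z) U Up
                  Hdx (Rabs_avg_le w U j HU) (Rabs_avg_w_diff_le j) Hdiff) as H.
    eapply Rle_trans; [right|eapply Rle_trans; [exact H|right]]; ring.
  - apply Req_le. distribute_sumZ. rewrite (sumZ_sq_shift_sub (Dp dx (Dc dx e)) 1) by l2_tac. ring.
Qed.

Lemma sumZ_D3_nonlinear_flux_le :
  sumZ (fun j => 2 * (D3 dx e j * (Dc dx (fun i => w i * e i) j + Dc dx (fun i => e i ^ 2 / 2) j)))
  <= 2 * U * sumZ (fun j => Dp dx (Dc dx e) j * Dp dx (Dc dx e) j)
     + (14/3 * E + dx * Up / 2) * sumZ (fun j => Dp dx (Dm dx e) j * Dp dx (Dm dx e) j)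
     + 2 * Up * sumZ (fun j => Rabs (Dp dx (Dm dx e) j) * Rabs (Dc dx e (j - 1)%Z))
     + sumZ (fun j => 2 * (D3 dx e j * (avg e j * Dc dx w j))).
Proof.
  rewrite (sumZ_ext _ (fun j => 2 * (D3 dx e j * (avg w j * Dc dx e j))
                                + 2 * (D3 dx e j * (avg e j * Dc dx w j))
                                + 2 * (D3 dx e j * Dc dx (fun i => e i ^ 2 / 2) j)))
    by (intros j; rewrite Dc_mult by exact Hdx; ring).
  rewrite !sumZ_plus by summable_tac.
  pose proof sumZ_D3_avg_Dc_le. pose proof sumZ_D3_Dc_sq_le. lra.
Qed.

Lemma sumZ_D3_avg_e_Dc_w_le (k : R) :
  k * sumZ (fun j => 2 * (D3 dx e j * (avg e j * Dc dx w j)))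
  <= Up * (k ^ 2 * sumZ (fun j => D3 dx e j * D3 dx e j) + sumZ (fun j => e j * e j)).
Proof.
  rewrite <- sumZ_scal.
  apply Rle_trans with (sumZ (fun j => Up * (k ^ 2 * (D3 dx e j * D3 dx e j))
                          + Up / 2 * (e (j + 1)%Z * e (j + 1)%Z + e (j - 1)%Z * e (j - 1)%Z))).
  - apply sumZ_le; [summable_tac|summable_tac|]. intros j.
    assert (HD := Rabs_Dc_w_le j).
    assert (HUp0 : 0 <= Up) by (eapply Rle_trans; [apply Rabs_pos|exact HD]).
    assert (Havg : avg e j * avg e j <= (e (j + 1)%Z * e (j + 1)%Z + e (j - 1)%Z * e (j - 1)%Z) / 2)
      by (unfold avg; pose proof (Rle_0_sqr (e (j + 1)%Z - e (j - 1)%Z)); unfold Rsqr in *; nra).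
    pose proof (Rmult_le_young (Dc dx w j) Up (k * D3 dx e j) (avg e j) HD).
    assert (Up * (avg e j * avg e j)
            <= Up * ((e (j + 1)%Z * e (j + 1)%Z + e (j - 1)%Z * e (j - 1)%Z) / 2))
      by (apply Rmult_le_compat_l; assumption).
    nra.
  - apply Req_le. distribute_sumZ.
    rewrite (sumZ_sq_shift e 1), (sumZ_sq_shift_sub e 1) by assumption. field.
Qed.

Lemma sumZ_DpDm_Dc_pred_sq_le :
  sumZ (fun j => Rabs (Dp dx (Dm dx e) j) * Rabs (Dc dx e (j - 1)%Z)) ^ 2
  <= sumZ (fun j => e j * e j) * sumZ (fun j => D3 dx e j * D3 dx e j).
Proof.
  set (Se := sumZ (fun j => e j * e j)). set (ST := sumZ (fun j => D3 dx e j * D3 dx e j)).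
  set (SL := sumZ (fun j => Dp dx (Dm dx e) j * Dp dx (Dm dx e) j)).
  set (SQ := sumZ (fun j => Dp dx e j * Dp dx e j)).
  set (SR := sumZ (fun j => Dc dx e j * Dc dx e j)).
  assert (HSe : 0 <= Se) by (apply sumZ_sq_nonneg; l2_tac).
  assert (HST : 0 <= ST) by (apply sumZ_sq_nonneg; l2_tac).
  assert (HSL : 0 <= SL) by (apply sumZ_sq_nonneg; l2_tac).
  assert (HSQ : 0 <= SQ) by (apply sumZ_sq_nonneg; l2_tac).
  assert (HSR : 0 <= SR) by (apply sumZ_sq_nonneg; l2_tac).
  assert (HRQ : SR <= SQ).
  { pose proof (sumZ_Dp_sq dx e Hdx He) as H. fold SQ SR SL in H.
    assert (0 <= dx ^ 2 / 4 * SL) by (apply Rmult_le_pos; [pose proof (pow2_ge_0 dx)|]; lra).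
    lra. }
  assert (HQ : SQ * SQ <= Se * SL).
  { pose proof (sumZ_e_DpDm dx e Hdx He) as H. fold SQ in H.
    pose proof (sumZ_cauchy_schwarz e (Dp dx (Dm dx e)) He ltac:(l2_tac)) as CS.
    rewrite H in CS. fold Se SL in CS. lra. }
  assert (HL : SL * SL <= SQ * ST).
  { pose proof (sumZ_DpDm_sq_Dp_D3 dx e Hdx He) as H. fold SL in H.
    pose proof (sumZ_cauchy_schwarz (Dp dx e) (D3 dx e) ltac:(l2_tac) ltac:(l2_tac)) as CS.
    fold SQ ST in CS.
    replace (sumZ (fun j => Dp dx e j * D3 dx e j)) with (- SL) in CS by lra. nra. }
  pose proof (sumZ_cauchy_schwarz (fun j => Rabs (Dp dx (Dm dx e) j))
                (fun j => Rabs (Dc dx e (j - 1)%Z)) ltac:(l2_tac) ltac:(l2_tac)) as CS.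
  cbv beta in CS.
  rewrite (sumZ_ext (fun j => Rabs (Dp dx (Dm dx e) j) * Rabs (Dp dx (Dm dx e) j))
             (fun j => Dp dx (Dm dx e) j * Dp dx (Dm dx e) j)) in CS
    by (intros j; rewrite <- Rabs_mult; apply Rabs_right, Rle_ge, Rle_0_sqr).
  rewrite (sumZ_ext (fun j => Rabs (Dc dx e (j - 1)%Z) * Rabs (Dc dx e (j - 1)%Z))
             (fun j => Dc dx e (j - 1)%Z * Dc dx e (j - 1)%Z)) in CS
    by (intros j; rewrite <- Rabs_mult; apply Rabs_right, Rle_ge, Rle_0_sqr).
  rewrite (sumZ_sq_shift_sub (Dc dx e) 1) in CS by l2_tac. fold SL SR in CS.
  pose proof (mult_le_of_sq_le_cross SL SQ Se ST HSL HSQ HSe HST HQ HL).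
  assert (SL * SR <= SL * SQ) by (apply Rmult_le_compat_l; assumption).
  lra.
Qed.

End Estimates.

(** * The energy estimate *)

Lemma error_equation (c theta dt dx : R) (v w : nat -> seqZ) (n : nat) (j : Z) :
  0 < dt -> 0 < dx -> scheme c theta dt dx v ->
  let e := fun k j => v k j - w k j in
  Atheta theta dt dx (e (S n)) j
  = Atheta theta dt dx (e n) j
    - dt * (D3 dx (e n) j + (Dc dx (fun i => w n i * e n i) j + Dc dx (fun i => e n i ^ 2 / 2) j)
            - c * dx / 2 * Dp dx (Dm dx (e n)) j + consist c theta dt dx w n j).
Proof.
  intros Hdt Hdx Hscheme e. specialize (Hscheme n j).
  unfold e, consist, Atheta, D3, Dc, Dp, Dm in *. cbv beta in *. revert Hscheme.
  normalize_indices (v (S n)). normalize_indices (v n).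
  normalize_indices (w (S n)). normalize_indices (w n).
  intros Hs.
  match type of Hs with ?l = ?r => match goal with |- ?x = ?y =>
    assert (Hdiff : x - y = dt * (l - r)) by (field; lra) end end.
  rewrite Hs in Hdiff. lra.
Qed.

Lemma sumZ_Atheta_sq (th dt dx : R) (e : seqZ) : l2Z e ->
  sumZ (fun j => Atheta th dt dx e j * Atheta th dt dx e j)
  = sumZ (fun j => e j * e j) + 2 * th * dt * sumZ (fun j => e j * D3 dx e j)
    + th ^ 2 * dt ^ 2 * sumZ (fun j => D3 dx e j * D3 dx e j).
Proof.
  intros He. rewrite <- !sumZ_scal, <- !sumZ_plus by summable_tac.
  apply sumZ_ext. intros j. unfold Atheta. ring.
Qed.

Lemma ipD_Bb (c dt dx : R) (e : seqZ) : l2Z e ->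
  ipD dx (Bb c dt dx (Dp dx e)) (fun j => Dp dx e j ^ 2)
  = dx * ((dx - c * dt) * (dx / 6 * sumZ (fun j => Dp dx e j ^ 3))
          - (dx - c * dt) * c * sumZ (fun j => Dp dx e j * Dp dx e j)).
Proof.
  intros He. unfold ipD. f_equal.
  rewrite <- !sumZ_scal, <- sumZ_minus by summable_tac.
  apply sumZ_ext. intros j. unfold Bb. ring.
Qed.

Section EnergyEstimate.
Variables (c th gamma dt dx : R) (e w eps : seqZ).
Hypothesis Hc : 0 < c.
Hypothesis Hdt : 0 < dt.
Hypothesis Hdx : 0 < dx.
Hypothesis Hth : 1/2 <= th <= 1.
Hypothesis He : l2Z e.
Hypothesis Hw : l2Z w.
Hypothesis Heps : l2Z eps.

Lemma sumZ_error_update_sq_le :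
  sumZ (fun j => (Atheta th dt dx e j
                  - dt * (D3 dx e j
                          + (Dc dx (fun i => w i * e i) j + Dc dx (fun i => e i ^ 2 / 2) j)
                          - c * dx / 2 * Dp dx (Dm dx e) j + eps j))
                 * (Atheta th dt dx e j
                  - dt * (D3 dx e j
                          + (Dc dx (fun i => w i * e i) j + Dc dx (fun i => e i ^ 2 / 2) j)
                          - c * dx / 2 * Dp dx (Dm dx e) j + eps j)))
  <= (1 + dt) * sumZ (fun j => e j * e j)
     - 2 * (1 + dt) * (1 - th) * dt * sumZ (fun j => e j * D3 dx e j)
     + (1 + dt) * (1 - th) ^ 2 * dt ^ 2 * sumZ (fun j => D3 dx e j * D3 dx e j)
     - 2 * dt * sumZ (fun j => e j * Dc dx (fun i => w i * e i) j)
     - 2 * dt * sumZ (fun j => e j * Dc dx (fun i => e i ^ 2 / 2) j)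
     + c * dt * dx * sumZ (fun j => e j * Dp dx (Dm dx e) j)
     + (1 - th) * dt ^ 2 * sumZ (fun j => 2 * (D3 dx e j * (Dc dx (fun i => w i * e i) j
                                                            + Dc dx (fun i => e i ^ 2 / 2) j)))
     - c * (1 - th) * dt ^ 2 * dx * sumZ (fun j => D3 dx e j * Dp dx (Dm dx e) j)
     + dt ^ 2 * sumZ (fun j => (Dc dx (fun i => w i * e i) j + Dc dx (fun i => e i ^ 2 / 2) j)
                               * (Dc dx (fun i => w i * e i) j + Dc dx (fun i => e i ^ 2 / 2) j))
     - c * dt ^ 2 * dx * sumZ (fun j => Dp dx (Dm dx e) j * Dc dx (fun i => w i * e i) j)
     - c * dt ^ 2 * dx * sumZ (fun j => Dp dx (Dm dx e) j * Dc dx (fun i => e i ^ 2 / 2) j)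
     + c ^ 2 * dt ^ 2 * dx ^ 2 / 4 * sumZ (fun j => Dp dx (Dm dx e) j * Dp dx (Dm dx e) j)
     + dt * (1 + 4 * (dt / dx) + dt) * sumZ (fun j => eps j * eps j)
     + dt ^ 2 * dx * sumZ (fun j => Dc dx (fun i => w i * e i) j * Dc dx (fun i => w i * e i) j)
     + dt ^ 2 * dx * sumZ (fun j => Dc dx (fun i => e i ^ 2 / 2) j * Dc dx (fun i => e i ^ 2 / 2) j)
     + c ^ 2 * dt ^ 2 * dx ^ 3 / 8 * sumZ (fun j => Dp dx (Dm dx e) j * Dp dx (Dm dx e) j).
Proof.
  match goal with |- _ <= ?rhs =>
    apply Rle_trans with (sumZ (fun j =>
      (1 + dt) * (e j * e j) - 2 * (1 + dt) * (1 - th) * dt * (e j * D3 dx e j)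
      + (1 + dt) * (1 - th) ^ 2 * dt ^ 2 * (D3 dx e j * D3 dx e j)
      - 2 * dt * (e j * Dc dx (fun i => w i * e i) j)
      - 2 * dt * (e j * Dc dx (fun i => e i ^ 2 / 2) j)
      + c * dt * dx * (e j * Dp dx (Dm dx e) j)
      + (1 - th) * dt ^ 2 * (2 * (D3 dx e j * (Dc dx (fun i => w i * e i) j
                                               + Dc dx (fun i => e i ^ 2 / 2) j)))
      - c * (1 - th) * dt ^ 2 * dx * (D3 dx e j * Dp dx (Dm dx e) j)
      + dt ^ 2 * ((Dc dx (fun i => w i * e i) j + Dc dx (fun i => e i ^ 2 / 2) j)
                  * (Dc dx (fun i => w i * e i) j + Dc dx (fun i => e i ^ 2 / 2) j))
      - c * dt ^ 2 * dx * (Dp dx (Dm dx e) j * Dc dx (fun i => w i * e i) j)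
      - c * dt ^ 2 * dx * (Dp dx (Dm dx e) j * Dc dx (fun i => e i ^ 2 / 2) j)
      + c ^ 2 * dt ^ 2 * dx ^ 2 / 4 * (Dp dx (Dm dx e) j * Dp dx (Dm dx e) j)
      + dt * (1 + 4 * (dt / dx) + dt) * (eps j * eps j)
      + dt ^ 2 * dx * (Dc dx (fun i => w i * e i) j * Dc dx (fun i => w i * e i) j)
      + dt ^ 2 * dx * (Dc dx (fun i => e i ^ 2 / 2) j * Dc dx (fun i => e i ^ 2 / 2) j)
      + c ^ 2 * dt ^ 2 * dx ^ 3 / 8 * (Dp dx (Dm dx e) j * Dp dx (Dm dx e) j)))
  end.
  - apply sumZ_le; [summable_tac|summable_tac|]. intros j.
    pose proof (error_update_sq_le c th dt dx (e j) (D3 dx e j) (Dp dx (Dm dx e) j)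
                  (Dc dx (fun i => w i * e i) j) (Dc dx (fun i => e i ^ 2 / 2) j) (eps j)
                  Hdt Hdx) as H.
    cbv zeta in H. unfold Atheta.
    match type of H with ?l <= _ =>
      apply Rle_trans with l; [right; ring|eapply Rle_trans; [exact H|right; field; lra]] end.
  - apply Req_le. distribute_sumZ. reflexivity.
Qed.

Lemma energy_estimate :
  let U := supnorm w in let Up := supnorm (Dp dx w) in let E := supnorm e in
  nrmD dx (fun j => Atheta th dt dx e j
            - dt * (D3 dx e j + (Dc dx (fun i => w i * e i) j + Dc dx (fun i => e i ^ 2 / 2) j)
                    - c * dx / 2 * Dp dx (Dm dx e) j + eps j)) ^ 2
  <= nrmD dx (Atheta th dt dx e) ^ 2 * (1 + dt * Ea c dt dx U Up E)
     + dt * nrmD dx eps ^ 2 * (1 + 4 * (dt / dx) + dt)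
     + dt * ipD dx (Bb c dt dx (Dp dx e)) (fun j => Dp dx e j ^ 2)
     + dt ^ 2 * Bc c dx U E * nrmD dx (Dc dx e) ^ 2
     + dt * Be th gamma dt dx U E * nrmD dx (Dp dx (Dc dx e)) ^ 2
     + dt * Bf c th gamma dt dx E * nrmD dx (D3 dx e) ^ 2.
Proof.
  intros U Up E.
  assert (Hwb : boundedZ w) by (apply l2Z_boundedZ, Hw).
  assert (Hpb : boundedZ (Dp dx w)) by (apply l2Z_boundedZ; l2_tac).
  assert (Heb : boundedZ e) by (apply l2Z_boundedZ, He).
  assert (HUb : forall j, Rabs (w j) <= U) by (intros j; apply supnorm_ge, Hwb).
  assert (HUpb : forall j, Rabs (Dp dx w j) <= Up) by (intros j; apply supnorm_ge, Hpb).
  assert (HEb : forall j, Rabs (e j) <= E) by (intros j; apply supnorm_ge, Heb).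
  pose proof (energy_inequality_of_sums c th gamma dt dx U Up E _ _ _ _ _ _ _
    (sumZ (fun j => eps j * eps j)) _ _ _ _ _ _ _ _ _ _ _ _ _ _
    Hc Hdt Hdx Hth (supnorm_nonneg _ Hwb) (supnorm_nonneg _ Hpb) (supnorm_nonneg _ Heb)
    (supnorm_Dp_le dx w Hdx Hwb)
    (sumZ_sq_nonneg e He) (sumZ_sq_nonneg (D3 dx e) ltac:(l2_tac))
    (sumZ_sq_nonneg (Dp dx (Dm dx e)) ltac:(l2_tac)) (sumZ_sq_nonneg (Dc dx e) ltac:(l2_tac))
    (sumZ_sq_nonneg (Dp dx (Dc dx e)) ltac:(l2_tac))
    (sumZ_Atheta_sq th dt dx e He)
    (sumZ_e_D3 dx e Hdx He) (sumZ_e_DpDm dx e Hdx He) (sumZ_D3_DpDm dx e Hdx He)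
    (sumZ_Dp_sq dx e Hdx He) (sumZ_DpDm_sq dx e Hdx He) (sumZ_e_Dc_sq dx e Hdx He)
    (sumZ_DpDm_sq_le dx e Hdx He) (sumZ_Dc_mult_sq_le dx U e w Hdx He Hw HUb)
    (sumZ_Dc_sq_half_sq_le dx E e Hdx He HEb) (sumZ_e_Dc_mult_ge dx Up e w Hdx He Hw HUpb)
    (sumZ_DpDm_Dc_mult_ge dx Up e w Hdx He Hw HUpb) (sumZ_DpDm_Dc_sq_ge dx E e Hdx He HEb)
    (sumZ_nonlinear_flux_sq_le dx U Up E e w Hdx He Hw HUb HUpb HEb)
    (sumZ_D3_nonlinear_flux_le dx U Up E e w Hdx He Hw HUb HUpb HEb)
    (sumZ_D3_avg_e_Dc_w_le dx Up e w Hdx He Hw HUpb ((1 - th) * dt))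
    (sumZ_DpDm_Dc_pred_sq_le dx e Hdx He)) as Hsums.
  rewrite !nrmD_sq, ipD_Bb by (auto; l2_tac).
  pose proof sumZ_error_update_sq_le as Hupd.
  apply (Rmult_le_compat_l dx) in Hupd; [|lra].
  apply (Rmult_le_compat_l dx) in Hsums; [|lra].
  lra.
Qed.

End EnergyEstimate.

Theorem corollary3
  (u0 : R -> R) (u : R -> R -> R) (T c dt dx theta gamma : R)
  (v : nat -> seqZ) (n : nat)
  (HT : 0 < T) (Hc : 0 < c) (Hdt : 0 < dt) (Hdx : 0 < dx)
  (Hu : kdv_solution u0 u T)
  (Huavg_l2 : forall k : nat, l2Z (uavg u0 u T dt dx k))
  (Hscheme : scheme c theta dt dx v)
  (Hv0 : forall j : Z, v O j = / dx * RInt u0 (xj dx j) (xj dx (j + 1)))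
  (Hv_l2 : forall k : nat, l2Z (v k))
  (Hn : (n < Nsteps T dt)%nat)
  (Hgamma : 0 <= gamma < 1/2)
  (Htheta : 1/2 <= theta <= 1) :
  let w := uavg u0 u T dt dx in
  let e := fun k : nat => (fun j : Z => v k j - w k j) in
  let eps := consist c theta dt dx w n in
  let U := supnorm (w n) in
  let Up := supnorm (Dp dx (w n)) in
  let E := supnorm (e n) in
  let A := Atheta theta dt dx in
  (nrmD dx (A (e (S n)))) ^ 2
  <= (nrmD dx (A (e n))) ^ 2 * (1 + dt * Ea c dt dx U Up E)
     + dt * (nrmD dx eps) ^ 2 * (1 + 4 * (dt / dx) + dt)
     + dt * ipD dx (Bb c dt dx (Dp dx (e n))) (fun j => (Dp dx (e n) j) ^ 2)
     + dt ^ 2 * Bc c dx U E * (nrmD dx (Dc dx (e n))) ^ 2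
     + dt * Be theta gamma dt dx U E * (nrmD dx (Dp dx (Dc dx (e n)))) ^ 2
     + dt * Bf c theta gamma dt dx E * (nrmD dx (D3 dx (e n))) ^ 2.
Proof.
  intros w e eps U Up E A.
  assert (Hen : l2Z (e n)) by (pose proof (Hv_l2 n); pose proof (Huavg_l2 n); unfold e; l2_tac).
  assert (Heps : l2Z eps).
  { pose proof (Huavg_l2 n); pose proof (Huavg_l2 (S n)). unfold eps, consist. l2_tac. }
  unfold A. erewrite nrmD_ext.
  - exact (energy_estimate c theta gamma dt dx (e n) (w n) eps Hc Hdt Hdx Htheta Hen
             (Huavg_l2 n) Heps).
  - intros j. exact (error_equation c theta dt dx v w n j Hdt Hdx Hscheme).
Qed.
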